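(* For the SVIQR system, if $R_0>1$ then the unique endemic equilibrium $E^*=(S_k^*,V_k^*,I_k^*,Q_k^*,R_k^* )_{k=1}^n$ (the unique equilibrium with nonnegative components and $\Theta>0$) is globally asymptotically stable: it is Lyapunov stable, and every solution whose initial data satisfy $S_k(0),V_k(0),I_k(0),Q_k(0),R_k(0)>0$ and $S_k(0)+V_k(0)+I_k(0)+Q_k(0)+R_k(0)=N_k^*$ for all $k$ converges to $E^*$ as $t\to\infty$.
   Context: Fix an integer $n\ge1$ and numbers $p(1),\dots,p(n)>0$ with $\sum_{k=1}^n p(k)=1$; set $\langle k\rangle=\sum_{k=1}^n kp(k)$. Fix constants $b>d>0$ and let $\Phi^*>0$ satisfy $\Phi^*=\frac{1}{\langle k\rangle}\sum_{i=1}^n \frac{i\,p(i)\,b\Phi^*}{d+bi\Phi^*}$. For $k=1,\dots,n$ put $N_k^*=\frac{bk\Phi^*}{d+bk\Phi^*}\in(0,1)$ and $\Lambda_k=bk(1-N_k^* )\Phi^*$ (so $\Lambda_k=dN_k^*>0$). Parameters: $\lambda(k)>0$, $\varphi(k)>0$, $\mu_k>0$ for $k=1,\dots,n$; constants $\alpha,\beta,\gamma,\eta,\omega>0$ and $\delta\in[0,1]$. For functions $I_1(t),\dots,I_n(t)$ set $\Theta(t)=\frac{1}{\langle k\rangle}\sum_{i=1}^n\varphi(i)p(i)I_i(t)$. The SVIQR system is, for $k=1,\dots,n$: $S_k'=\Lambda_k-\lambda(k)S_k\Theta+\omega V_k-(\mu_k+d)S_k$, $V_k'=\mu_kS_k-\delta\lambda(k)V_k\Theta-(d+\omega+\alpha)V_k$,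 $I_k'=\lambda(k)S_k\Theta+\delta\lambda(k)V_k\Theta-(\gamma+\beta+d)I_k$, $Q_k'=\beta I_k-(\eta+d)Q_k$, $R_k'=\gamma I_k+\eta Q_k+\alpha V_k-dR_k$. Its basic reproduction number is $R_0=\frac{1}{\langle k\rangle}\sum_{k=1}^n\varphi(k)p(k)\lambda(k)\frac{\Lambda_k(d+\omega+\alpha+\delta\mu_k)}{(\gamma+\beta+d)[(d+\alpha+\omega)d+(d+\alpha)\mu_k]}$. When $R_0>1$ the system has exactly one equilibrium with nonnegative components and $\Theta>0$ (endemic equilibrium), denoted $E^*$. *)

From Stdlib Require Import Reals Lra Lia.
Open Scope R_scope.

Fixpoint sum1 (n : nat) (f : nat -> R) : R :=
  match n with
  | O => 0
  | S m => sum1 m f + f (S m)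
  end.

(* Parameters of the SVIQR network model. Indices k range over 1..nn. *)
Record Params := mkParams {
  nn : nat;             (* maximal degree n *)
  pk : nat -> R;        (* degree distribution p(k) *)
  bb : R;
  dd : R;
  Phis : R;
  lam : nat -> R;
  phi : nat -> R;
  mu : nat -> R;
  palpha : R; pbeta : R; pgamma : R; peta : R; pomega : R; pdelta : R }.

Definition avgk (P : Params) : R := sum1 (nn P) (fun k => INR k * pk P k).

Definition Nstar (P : Params) (k : nat) : R :=
  bb P * INR k * Phis P / (dd P + bb P * INR k * Phis P).

Definition Lam (P : Params) (k : nat) : R :=
  bb P * INR k * (1 - Nstar P k) * Phis P.

Definition R0num (P : Params) : R :=
  / avgk P * sum1 (nn P) (fun k =>
     phi P k * pk P k * lam P k *
     (Lam P k * (dd P + pomega P + palpha P + pdelta P * mu P k) /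
      ((pgamma P + pbeta P + dd P) *
       ((dd P + palpha P + pomega P) * dd P + (dd P + palpha P) * mu P k)))).

Record state := mkState {
  sS : nat -> R; sV : nat -> R; sI : nat -> R; sQ : nat -> R; sR : nat -> R }.

Definition compo (j : nat) (s : state) : nat -> R :=
  match j with
  | O => sS s | 1%nat => sV s | 2%nat => sI s | 3%nat => sQ s | _ => sR s
  end.

Definition Theta (P : Params) (s : state) : R :=
  / avgk P * sum1 (nn P) (fun i => phi P i * pk P i * sI s i).

Definition rhs (P : Params) (s : state) : state :=
  let Th := Theta P s in
  mkState
    (fun k => Lam P k - lam P k * sS s k * Th + pomega P * sV s k
              - (mu P k + dd P) * sS s k)
    (fun k => mu P k * sS s k - pdelta P * lam P k * sV s k * Th
              - (dd P + pomega P + palpha P) * sV s k)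
    (fun k => lam P k * sS s k * Th + pdelta P * lam P k * sV s k * Th
              - (pgamma P + pbeta P + dd P) * sI s k)
    (fun k => pbeta P * sI s k - (peta P + dd P) * sQ s k)
    (fun k => pgamma P * sI s k + peta P * sQ s k + palpha P * sV s k
              - dd P * sR s k).

Definition endemic_equilibrium (P : Params) (E : state) : Prop :=
  (forall j k, (j <= 4)%nat -> (1 <= k <= nn P)%nat ->
     compo j (rhs P E) k = 0 /\ 0 <= compo j E k) /\
  0 < Theta P E.

(* x : R -> state is a solution on [0, +oo): differentiable for t > 0 with
   the SVIQR derivative, and right-continuous at t = 0. *)
Definition is_solution (P : Params) (x : R -> state) : Prop :=
  forall j k, (j <= 4)%nat -> (1 <= k <= nn P)%nat ->
    (forall t, 0 < t ->
       derivable_pt_lim (fun u => compo j (x u) k) t (compo j (rhs P (x t)) k)) /\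
    limit1_in (fun u => compo j (x u) k) (fun u => 0 <= u) (compo j (x 0) k) 0.

Definition sdist (P : Params) (s e : state) : R :=
  sum1 (nn P) (fun k =>
    Rabs (sS s k - sS e k) + Rabs (sV s k - sV e k) + Rabs (sI s k - sI e k)
    + Rabs (sQ s k - sQ e k) + Rabs (sR s k - sR e k)).

Definition total (s : state) (k : nat) : R :=
  sS s k + sV s k + sI s k + sQ s k + sR s k.

Definition feasible (P : Params) (s : state) : Prop :=
  forall k, (1 <= k <= nn P)%nat ->
    (forall j, (j <= 4)%nat -> 0 <= compo j s k) /\ total s k = Nstar P k.

Definition positive_data (P : Params) (s : state) : Prop :=
  forall k, (1 <= k <= nn P)%nat ->
    (forall j, (j <= 4)%nat -> 0 < compo j s k) /\ total s k = Nstar P k.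

From Stdlib Require Import Reals Ranalysis5 Lra Lia Classical List.
Import ListNotations.
Open Scope R_scope.

(* With [g u = u - 1 - ln u], the weights [w_k = varphi(k) p(k) / <k>] and the
   endemic equilibrium [E*], the Lyapunov function
     [L = sum_k w_k (S*_k g(S_k / S*_k) + V*_k g(V_k / V*_k) + I*_k g(I_k / I*_k))]
   satisfies, by AM-GM and [sum_k w_k I_k = Theta],
     [L' <= - sum_k w_k (d S*_k (x - 1)^2 / x + omega V*_k (x - y)^2 / (x y))]
   with [x = S_k / S*_k], [y = V_k / V*_k].  As [g] blows up at [0] and at infinity,
   a bounded [L] keeps [S, V, I] positive and bounded, so solutions stay where [L]
   is defined.  A Barbalat-type argument then gives [S_k -> S*_k] and [x - y -> 0];
   [Theta] is read off the [S]-equation, [I_k] and [Q_k] solve stable linear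
   equations with convergent forcing, and [R_k] follows from the conservation of
   [S + V + I + Q + R].  Stability holds because [L] is quadratic near [E*] and
   controls the distance to [E*].  The equilibrium comes from the intermediate
   value theorem applied to the equation for [Theta], and it is unique because it
   attracts every other equilibrium. *)

Lemma Rabs_le_inv x B : Rabs x <= B -> - B <= x <= B.
Proof. unfold Rabs; destruct Rcase_abs; intros; lra. Qed.

Lemma sum1_ext n f g : (forall k, (1 <= k <= n)%nat -> f k = g k) -> sum1 n f = sum1 n g.
Proof.
  induction n; simpl; intros H; auto.
  rewrite IHn by (intros; apply H; lia). rewrite (H (S n)) by lia. reflexivity.
Qed.

Lemma sum1_plus n f g : sum1 n (fun k => f k + g k) = sum1 n f + sum1 n g.
Proof. induction n; simpl; [lra|rewrite IHn; lra]. Qed.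

Lemma sum1_minus n f g : sum1 n (fun k => f k - g k) = sum1 n f - sum1 n g.
Proof. induction n; simpl; [lra|rewrite IHn; lra]. Qed.

Lemma sum1_scal n c f : sum1 n (fun k => c * f k) = c * sum1 n f.
Proof. induction n; simpl; [lra|rewrite IHn; lra]. Qed.

Lemma sum1_const n c : sum1 n (fun _ => c) = INR n * c.
Proof. induction n; simpl sum1; [simpl; lra|rewrite IHn, S_INR; lra]. Qed.

Lemma sum1_le n f g : (forall k, (1 <= k <= n)%nat -> f k <= g k) -> sum1 n f <= sum1 n g.
Proof.
  induction n; simpl; intros H; [lra|].
  assert (sum1 n f <= sum1 n g) by (apply IHn; intros; apply H; lia).
  assert (f (S n) <= g (S n)) by (apply H; lia). lra.
Qed.

Lemma sum1_nonneg n f : (forall k, (1 <= k <= n)%nat -> 0 <= f k) -> 0 <= sum1 n f.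
Proof.
  intros H. replace 0 with (sum1 n (fun _ => 0)) by (rewrite sum1_const; lra).
  apply sum1_le; auto.
Qed.

Lemma sum1_pos n f : (1 <= n)%nat -> (forall k, (1 <= k <= n)%nat -> 0 < f k) -> 0 < sum1 n f.
Proof.
  destruct n; [lia|]. intros _ H. simpl.
  assert (0 <= sum1 n f) by (apply sum1_nonneg; intros; left; apply H; lia).
  assert (0 < f (S n)) by (apply H; lia). lra.
Qed.

Lemma sum1_term_le n f k : (forall j, (1 <= j <= n)%nat -> 0 <= f j) ->
  (1 <= k <= n)%nat -> f k <= sum1 n f.
Proof.
  induction n; intros H Hk; [lia|]. simpl.
  destruct (Nat.eq_dec k (S n)) as [->|Hne].
  - assert (0 <= sum1 n f) by (apply sum1_nonneg; intros; apply H; lia). lra.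
  - assert (f k <= sum1 n f) by (apply IHn; [intros; apply H; lia| lia]).
    assert (0 <= f (S n)) by (apply H; lia). lra.
Qed.

(* [min1 n f] is [min (f 1, ..., f n)], with the junk value [1] for [n = 0]. *)
Fixpoint min1 (n : nat) (f : nat -> R) : R :=
  match n with O => 1 | S m => Rmin (min1 m f) (f (S m)) end.

Lemma min1_le n f k : (1 <= k <= n)%nat -> min1 n f <= f k.
Proof.
  induction n; intros Hk; [lia|]. simpl.
  destruct (Nat.eq_dec k (S n)) as [->|Hne]. apply Rmin_r.
  eapply Rle_trans; [apply Rmin_l|]. apply IHn; lia.
Qed.

Lemma min1_pos n f : (forall k, (1 <= k <= n)%nat -> 0 < f k) -> 0 < min1 n f.
Proof.
  induction n; simpl; intros H; [lra|].
  apply Rmin_glb_lt. apply IHn; intros; apply H; lia. apply H; lia.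
Qed.

Lemma Rmin_le_compat a b c d : a <= c -> b <= d -> Rmin a b <= Rmin c d.
Proof. unfold Rmin; repeat destruct Rle_dec; lra. Qed.

Lemma min1_le_compat n f g : (forall k, (1 <= k <= n)%nat -> f k <= g k) -> min1 n f <= min1 n g.
Proof.
  induction n; simpl; intros H; [lra|].
  apply Rmin_le_compat. apply IHn; intros; apply H; lia. apply H; lia.
Qed.

Lemma limit1_in_iff f D l x0 : limit1_in f D l x0 <->
  forall eps, 0 < eps -> exists alp, 0 < alp /\
    forall u, D u -> Rabs (u - x0) < alp -> Rabs (f u - l) < eps.
Proof.
  unfold limit1_in, limit_in; simpl; unfold Rdist. split.
  - intros H eps He. destruct (H eps He) as [alp [Ha H']]. exists alp; split; auto.
  - intros H eps He. destruct (H eps He) as [alp [Ha H']]. exists alp; split; auto.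
    intros u [Hu1 Hu2]; auto.
Qed.

Lemma limit1_in_restrict f D D' x0 : (forall u, D' u -> D u \/ u = x0) ->
  limit1_in f D (f x0) x0 -> limit1_in f D' (f x0) x0.
Proof.
  intros HD H. rewrite limit1_in_iff in *. intros eps He.
  destruct (H eps He) as [alp [Ha H']]. exists alp; split; auto.
  intros u Du Hu. destruct (HD u Du) as [Hd| ->]; auto.
  unfold Rminus; rewrite Rplus_opp_r, Rabs_R0. lra.
Qed.

Lemma limit1_in_of_continuity f t D : continuity_pt f t -> limit1_in f D (f t) t.
Proof.
  intros H. unfold continuity_pt, continue_in in H.
  apply (limit1_in_restrict f (D_x no_cond t)); [intros u _|exact H]. destruct (Req_dec u t); [right; auto | left; split; [exact I| auto]].
Qed.

Lemma limit1_in_of_deriv f t l D : derivable_pt_lim f t l -> limit1_in f D (f t) t.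
Proof.
  intros H. apply limit1_in_of_continuity, derivable_continuous_pt. exists l; exact H.
Qed.

Lemma lim_const c D t : limit1_in (fun _ => c) D c t.
Proof.
  rewrite limit1_in_iff. intros eps He. exists 1; split; [lra|].
  intros. unfold Rminus; rewrite Rplus_opp_r, Rabs_R0. lra.
Qed.

Lemma lim_plus f g D t : limit1_in f D (f t) t -> limit1_in g D (g t) t ->
  limit1_in (fun u => f u + g u) D (f t + g t) t.
Proof. apply limit_plus. Qed.

Lemma lim_mult f g D t : limit1_in f D (f t) t -> limit1_in g D (g t) t ->
  limit1_in (fun u => f u * g u) D (f t * g t) t.
Proof. apply limit_mul. Qed.

Lemma lim_minus f g D t : limit1_in f D (f t) t -> limit1_in g D (g t) t ->
  limit1_in (fun u => f u - g u) D (f t - g t) t.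
Proof. apply limit_minus. Qed.

Lemma lim_comp f g D t : limit1_in f D (f t) t -> continuity_pt g (f t) ->
  limit1_in (fun u => g (f u)) D (g (f t)) t.
Proof.
  intros Hf Hg. unfold continuity_pt, continue_in in Hg. rewrite limit1_in_iff in *.
  intros eps He. destruct (Hg eps He) as [a1 [Ha1 H1]].
  destruct (Hf a1 Ha1) as [a2 [Ha2 H2]]. exists a2; split; auto.
  intros u Du Hu. destruct (Req_dec (f u) (f t)) as [E|E].
  - rewrite E. unfold Rminus; rewrite Rplus_opp_r, Rabs_R0. lra.
  - apply H1; [split; [exact I| auto]|]. auto.
Qed.

Lemma lim_Rmin f g D t : limit1_in f D (f t) t -> limit1_in g D (g t) t ->
  limit1_in (fun u => Rmin (f u) (g u)) D (Rmin (f t) (g t)) t.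
Proof.
  rewrite !limit1_in_iff. intros Hf Hg eps He.
  destruct (Hf eps He) as [a1 [Ha1 H1]]. destruct (Hg eps He) as [a2 [Ha2 H2]].
  exists (Rmin a1 a2); split. apply Rmin_glb_lt; auto.
  intros u Du Hu.
  specialize (H1 u Du (Rlt_le_trans _ _ _ Hu (Rmin_l _ _))).
  specialize (H2 u Du (Rlt_le_trans _ _ _ Hu (Rmin_r _ _))).
  apply Rabs_def2 in H1. apply Rabs_def2 in H2. apply Rabs_def1;
  unfold Rmin; repeat destruct Rle_dec; lra.
Qed.

Lemma lim_sum1 n (F : nat -> R -> R) D t :
  (forall k, (1 <= k <= n)%nat -> limit1_in (F k) D (F k t) t) ->
  limit1_in (fun u => sum1 n (fun k => F k u)) D (sum1 n (fun k => F k t)) t.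
Proof.
  induction n; intros H; simpl. apply lim_const.
  apply (lim_plus (fun u => sum1 n (fun k => F k u)) (F (S n))).
  apply IHn; intros; apply H; lia. apply H; lia.
Qed.

Lemma lim_min1 n (F : nat -> R -> R) D t :
  (forall k, (1 <= k <= n)%nat -> limit1_in (F k) D (F k t) t) ->
  limit1_in (fun u => min1 n (fun k => F k u)) D (min1 n (fun k => F k t)) t.
Proof.
  induction n; intros H; simpl. apply lim_const.
  apply (lim_Rmin (fun u => min1 n (fun k => F k u)) (F (S n))).
  apply IHn; intros; apply H; lia. apply H; lia.
Qed.

Lemma derivable_pt_lim_sum1 n (F : nat -> R -> R) (DF : nat -> R) t :
  (forall k, (1 <= k <= n)%nat -> derivable_pt_lim (F k) t (DF k)) ->
  derivable_pt_lim (fun u => sum1 n (fun k => F k u)) t (sum1 n DF).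
Proof.
  induction n; intros H; simpl. apply derivable_pt_lim_const.
  apply (derivable_pt_lim_plus (fun u => sum1 n (fun k => F k u)) (F (S n))).
  apply IHn; intros; apply H; lia. apply H; lia.
Qed.

Lemma derivable_pt_lim_eq f t l l' : l = l' -> derivable_pt_lim f t l -> derivable_pt_lim f t l'.
Proof. intros ->; auto. Qed.

Lemma derivable_pt_lim_divc f c t l : c <> 0 -> derivable_pt_lim f t l ->
  derivable_pt_lim (fun u => f u / c) t (l / c).
Proof.
  intros Hc H. assert (K := derivable_pt_lim_mult f (fct_cte (/c)) t _ _ H (derivable_pt_lim_const (/c) t)).
  eapply derivable_pt_lim_eq; [|exact K]. unfold fct_cte. field. auto.
Qed.

Definition right_cont (f : R -> R) (a : R) := limit1_in f (fun u => a <= u) (f a) a.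

Lemma right_cont_of_deriv f a l : derivable_pt_lim f a l -> right_cont f a.
Proof. intros H; unfold right_cont; eapply limit1_in_of_deriv; eauto. Qed.

(* Unlike [MVT_cor2], the left end point only needs right continuity. *)
Lemma mvt_upper f D c a b : a < b ->
  (forall t, a < t <= b -> derivable_pt_lim f t (D t)) ->
  (forall t, a < t < b -> D t <= c) -> right_cont f a ->
  f b - f a <= c * (b - a).
Proof.
  intros Hab Hd Hc Hrc. apply Rle_plus_epsilon. intros eps He.
  unfold right_cont in Hrc. rewrite limit1_in_iff in Hrc.
  destruct (Hrc (eps/2)) as [alp [Ha H1]]; [lra|].
  set (C := Rabs c + 1). assert (HC : 0 < C) by (unfold C; pose proof (Rabs_pos c); lra).
  set (e := Rmin (alp/2) (Rmin ((b-a)/2) (eps / (2 * C)))).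
  assert (He0 : 0 < e) by (unfold e; repeat apply Rmin_glb_lt; try lra; apply Rdiv_lt_0_compat; lra).
  assert (He1 : e <= alp/2) by apply Rmin_l.
  assert (He2 : e <= (b-a)/2) by (eapply Rle_trans; [apply Rmin_r| apply Rmin_l]).
  assert (He3 : e <= eps / (2 * C)) by (eapply Rle_trans; [apply Rmin_r| apply Rmin_r]).
  destruct (MVT_cor2 f D (a+e) b) as [xi [Hxi1 Hxi2]]; [lra| intros u Hu; apply Hd; lra|].
  assert (Dxi : D xi <= c) by (apply Hc; lra).
  assert (A1 : Rabs (f (a+e) - f a) < eps/2).
  { apply H1; [lra|]. replace (a+e-a) with e by ring. rewrite Rabs_pos_eq; lra. }
  apply Rabs_def2 in A1.
  assert (A2 : f b - f (a+e) <= c * (b - (a+e))) by (rewrite Hxi1; apply Rmult_le_compat_r; lra).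
  assert (A3 : - c * e <= C * e).
  { apply Rmult_le_compat_r; [lra|]. unfold C. rewrite <- Rabs_Ropp. pose proof (RRle_abs (- c)). lra. }
  assert (A4 : C * e <= eps/2).
  { replace (eps/2) with (C * (eps / (2 * C))) by (field; lra). apply Rmult_le_compat_l; lra. }
  lra.
Qed.

Lemma mvt_lower f D c a b : a < b ->
  (forall t, a < t <= b -> derivable_pt_lim f t (D t)) ->
  (forall t, a < t < b -> c <= D t) -> right_cont f a ->
  c * (b - a) <= f b - f a.
Proof.
  intros Hab Hd Hc Hrc.
  enough (- f b - - f a <= - c * (b - a)) by lra.
  apply (mvt_upper (fun u => - f u) (fun u => - D u)); auto.
  - intros; apply derivable_pt_lim_opp; auto.
  - intros t Ht; specialize (Hc t Ht); lra.
  - apply limit_Ropp. exact Hrc.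
Qed.

Lemma lipschitz_of_bounded_deriv f D B :
  (forall t, 0 < t -> derivable_pt_lim f t (D t)) ->
  (forall t, 0 < t -> Rabs (D t) <= B) ->
  forall t s, 0 < t -> 0 < s -> Rabs (f t - f s) <= B * Rabs (t - s).
Proof.
  intros Hd HB.
  assert (K : forall t s, 0 < s -> s < t -> Rabs (f t - f s) <= B * Rabs (t - s)).
  { intros t s Hs Hst.
    assert (HB' : forall u, s < u < t -> - B <= D u <= B) by (intros; apply Rabs_le_inv, HB; lra).
    assert (Hrc : right_cont f s) by (apply (right_cont_of_deriv f s (D s)), Hd; lra).
    assert (f t - f s <= B * (t - s)).
    { apply (mvt_upper f D); auto. intros; apply Hd; lra. intros u Hu; apply HB'; auto. }
    assert ((-B) * (t - s) <= f t - f s).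
    { apply (mvt_lower f D); auto. intros; apply Hd; lra. intros u Hu; apply HB'; auto. }
    rewrite (Rabs_pos_eq (t - s)) by lra. apply Rabs_le. lra. }
  intros t s Ht Hs. destruct (Rtotal_order s t) as [H|[H|H]].
  - apply K; auto.
  - subst. unfold Rminus; rewrite !Rplus_opp_r, Rabs_R0, Rmult_0_r; lra.
  - rewrite Rabs_minus_sym, (Rabs_minus_sym t). apply K; auto.
Qed.

Definition cvinf (f : R -> R) (l : R) :=
  forall eps, 0 < eps -> exists T, forall t, T <= t -> Rabs (f t - l) < eps.

Lemma cv_const c : cvinf (fun _ => c) c.
Proof. intros eps He; exists 0; intros. unfold Rminus; rewrite Rplus_opp_r, Rabs_R0; lra. Qed.

Lemma cv_ext f g l : (forall t, 0 < t -> f t = g t) -> cvinf f l -> cvinf g l.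
Proof.
  intros H Hf eps He. destruct (Hf eps He) as [T HT]. exists (Rmax T 1). intros t Ht.
  pose proof (Rmax_l T 1). pose proof (Rmax_r T 1).
  rewrite <- H by lra. apply HT. lra.
Qed.

Lemma cv_plus f g a b : cvinf f a -> cvinf g b -> cvinf (fun t => f t + g t) (a + b).
Proof.
  intros Hf Hg eps He. destruct (Hf (eps/2)) as [T1 H1]; [lra|].
  destruct (Hg (eps/2)) as [T2 H2]; [lra|]. exists (Rmax T1 T2). intros t Ht.
  assert (A := H1 t (Rle_trans _ _ _ (Rmax_l _ _) Ht)).
  assert (B := H2 t (Rle_trans _ _ _ (Rmax_r _ _) Ht)).
  replace (f t + g t - (a + b)) with ((f t - a) + (g t - b)) by ring.
  eapply Rle_lt_trans; [apply Rabs_triang|]. lra.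
Qed.

Lemma cv_scal c f a : cvinf f a -> cvinf (fun t => c * f t) (c * a).
Proof.
  intros Hf eps He. set (C := Rabs c + 1). assert (HC : 0 < C) by (unfold C; pose proof (Rabs_pos c); lra).
  destruct (Hf (eps / C)) as [T HT]; [apply Rdiv_lt_0_compat; lra|].
  exists T. intros t Ht. specialize (HT t Ht).
  replace (c * f t - c * a) with (c * (f t - a)) by ring. rewrite Rabs_mult.
  assert (Rabs c * Rabs (f t - a) <= C * Rabs (f t - a)) by (unfold C; pose proof (Rabs_pos (f t - a)); nra).
  assert (C * Rabs (f t - a) < C * (eps / C)) by (apply Rmult_lt_compat_l; auto).
  replace (C * (eps / C)) with eps in * by (field; lra). lra.
Qed.

Lemma cv_minus f g a b : cvinf f a -> cvinf g b -> cvinf (fun t => f t - g t) (a - b).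
Proof.
  intros Hf Hg. assert (K := cv_plus f (fun t => -1 * g t) a (-1 * b) Hf (cv_scal (-1) g b Hg)).
  intros eps He. destruct (K eps He) as [T HT]. exists T. intros t Ht.
  replace (f t - g t - (a - b)) with (f t + -1 * g t - (a + -1 * b)) by ring. auto.
Qed.

Lemma cv_mult f g a b : cvinf f a -> cvinf g b -> cvinf (fun t => f t * g t) (a * b).
Proof.
  intros Hf Hg eps He.
  assert (Pa : 0 < Rabs a + 1) by (pose proof (Rabs_pos a); lra).
  assert (Pb : 0 < Rabs b + 1) by (pose proof (Rabs_pos b); lra).
  destruct (Hf (Rmin 1 (eps / (2 * (Rabs b + 1))))) as [T1 H1].
  { apply Rmin_glb_lt; [lra| apply Rdiv_lt_0_compat; lra]. }
  destruct (Hg (eps / (2 * (Rabs a + 1)))) as [T2 H2]; [apply Rdiv_lt_0_compat; lra|].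
  exists (Rmax T1 T2). intros t Ht.
  assert (A := H1 t (Rle_trans _ _ _ (Rmax_l _ _) Ht)).
  assert (B := H2 t (Rle_trans _ _ _ (Rmax_r _ _) Ht)).
  assert (A1 : Rabs (f t - a) < 1) by (eapply Rlt_le_trans; [exact A| apply Rmin_l]).
  assert (A2 : Rabs (f t - a) < eps / (2 * (Rabs b + 1))) by (eapply Rlt_le_trans; [exact A| apply Rmin_r]).
  assert (Hfa : Rabs (f t) <= Rabs a + 1).
  { replace (f t) with ((f t - a) + a) by ring. eapply Rle_trans; [apply Rabs_triang|]. lra. }
  replace (f t * g t - a * b) with (f t * (g t - b) + b * (f t - a)) by ring.
  eapply Rle_lt_trans; [apply Rabs_triang|]. rewrite !Rabs_mult.
  assert (Rabs (f t) * Rabs (g t - b) <= (Rabs a + 1) * (eps / (2 * (Rabs a + 1)))).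
  { apply Rmult_le_compat; try apply Rabs_pos; lra. }
  assert (Rabs b * Rabs (f t - a) < (Rabs b + 1) * (eps / (2 * (Rabs b + 1)))).
  { pose proof (Rabs_pos b); pose proof (Rabs_pos (f t - a)).
    apply Rle_lt_trans with ((Rabs b + 1) * Rabs (f t - a)). nra.
    apply Rmult_lt_compat_l; lra. }
  replace ((Rabs a + 1) * (eps / (2 * (Rabs a + 1)))) with (eps/2) in * by (field; lra).
  replace ((Rabs b + 1) * (eps / (2 * (Rabs b + 1)))) with (eps/2) in * by (field; lra).
  lra.
Qed.

Lemma cv_inv f a : cvinf f a -> a <> 0 -> cvinf (fun t => / f t) (/ a).
Proof.
  intros Hf Ha eps He. assert (Pa : 0 < Rabs a) by (apply Rabs_pos_lt; auto).
  destruct (Hf (Rmin (Rabs a / 2) (eps * (Rabs a * Rabs a) / 2))) as [T HT].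
  { apply Rmin_glb_lt; [lra|]. apply Rdiv_lt_0_compat; [|lra]. apply Rmult_lt_0_compat; nra. }
  exists T. intros t Ht. specialize (HT t Ht).
  assert (H1 : Rabs (f t - a) < Rabs a / 2) by (eapply Rlt_le_trans; [exact HT| apply Rmin_l]).
  assert (H2 : Rabs (f t - a) < eps * (Rabs a * Rabs a) / 2) by (eapply Rlt_le_trans; [exact HT| apply Rmin_r]).
  assert (Hft : Rabs a / 2 < Rabs (f t)).
  { assert (Rabs a <= Rabs (f t) + Rabs (f t - a)).
    { replace a with (f t - (f t - a)) at 1 by ring. eapply Rle_trans; [apply Rabs_triang|].
      rewrite Rabs_Ropp. lra. } lra. }
  assert (fne : f t <> 0) by (intro E; rewrite E, Rabs_R0 in Hft; lra).
  replace (/ f t - / a) with ((a - f t) / (f t * a)) by (field; auto).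
  unfold Rdiv. rewrite Rabs_mult, Rabs_inv, Rabs_mult, Rabs_minus_sym.
  apply Rmult_lt_reg_r with (Rabs (f t) * Rabs a); [nra|].
  rewrite Rmult_assoc, Rinv_l, Rmult_1_r by nra.
  assert (eps * (Rabs a * Rabs a) / 2 <= eps * (Rabs (f t) * Rabs a)).
  { apply Rle_trans with (eps * ((Rabs a / 2) * Rabs a)). right; field.
    apply Rmult_le_compat_l; [lra|]. apply Rmult_le_compat_r; lra. }
  lra.
Qed.

Lemma cv_sum1 n (F : nat -> R -> R) (l : nat -> R) :
  (forall k, (1 <= k <= n)%nat -> cvinf (F k) (l k)) ->
  cvinf (fun t => sum1 n (fun k => F k t)) (sum1 n l).
Proof.
  induction n; intros H; simpl. apply cv_const.
  apply (cv_plus (fun t => sum1 n (fun k => F k t)) (F (S n))).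
  apply IHn; intros; apply H; lia. apply H; lia.
Qed.

Lemma cv_dist f a : cvinf f a -> cvinf (fun t => Rabs (f t - a)) 0.
Proof.
  intros H eps He. destruct (H eps He) as [T HT]. exists T. intros t Ht.
  rewrite Rminus_0_r, Rabs_Rabsolu. auto.
Qed.

Lemma derivable_pt_lim_exp_affine k T t :
  derivable_pt_lim (fun u => exp (k * (u - T))) t (k * exp (k * (t - T))).
Proof.
  assert (H : derivable_pt_lim (fun u => k * (u - T)) t k).
  { intros eps He. exists (mkposreal 1 Rlt_0_1). intros h Hh _.
    replace ((k * (t + h - T) - k * (t - T)) / h - k) with 0 by (field; auto).
    rewrite Rabs_R0; auto. }
  assert (H2 := derivable_pt_lim_comp _ exp t k _ H (derivable_pt_lim_exp (k * (t - T)))).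
  unfold comp in H2. rewrite Rmult_comm. exact H2.
Qed.

(* Comparison with the solution of [z' = k c - k z]: the quantity
   [(y - c) exp (k (u - T))] is nonincreasing. *)
Lemma linear_ode_upper y F k c T t : 0 < k -> 0 <= T ->
  (forall u, 0 < u -> derivable_pt_lim y u (F u - k * y u)) -> right_cont y T ->
  (forall u, T < u -> F u <= k * c) -> T <= t ->
  y t - c <= (y T - c) * exp (- (k * (t - T))).
Proof.
  intros Hk HT Hy Hrc HF Ht.
  destruct (Req_dec t T) as [->|Hne].
  { replace (-(k*(T-T))) with 0 by ring. rewrite exp_0. lra. }
  set (E := fun u => exp (k * (u - T))).
  set (h := fun u => (y u - c) * E u).
  assert (Hd : forall u, 0 < u -> derivable_pt_lim h u ((F u - k * c) * E u)).
  { intros u Hu. eapply derivable_pt_lim_eq; [|apply (derivable_pt_lim_mult (fun u => y u - c) E);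
      [apply (derivable_pt_lim_minus y (fun _ => c)); [apply Hy, Hu| apply derivable_pt_lim_const]
      | apply derivable_pt_lim_exp_affine]].
    unfold E. ring. }
  assert (Hh : h t - h T <= 0 * (t - T)).
  { apply (mvt_upper h (fun u => (F u - k * c) * E u)); [lra| intros; apply Hd; lra| |].
    - intros u Hu. specialize (HF u ltac:(lra)). pose proof (exp_pos (k * (u - T))). unfold E. nra.
    - apply (lim_mult (fun u => y u - c) E); [apply (lim_minus y (fun _ => c)); [exact Hrc| apply lim_const]|].
      apply (limit1_in_of_deriv _ _ _ _ (derivable_pt_lim_exp_affine k T T)). }
  assert (ET : E T = 1) by (unfold E; replace (k * (T - T)) with 0 by ring; apply exp_0).
  assert (EE : E t * exp (- (k * (t - T))) = 1) by (unfold E; rewrite <- exp_plus, Rplus_opp_r; apply exp_0).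
  assert (A : (y t - c) * E t <= y T - c) by (unfold h in Hh; rewrite ET in Hh; lra).
  replace (y t - c) with ((y t - c) * E t * exp (- (k * (t - T)))) by (rewrite Rmult_assoc, EE; ring).
  apply Rmult_le_compat_r; [left; apply exp_pos| exact A].
Qed.

Lemma linear_ode_estimate y F k Fs T eps t : 0 < k -> 0 <= T -> 0 <= eps ->
  (forall u, 0 < u -> derivable_pt_lim y u (F u - k * y u)) -> right_cont y T ->
  (forall u, T < u -> Rabs (F u - Fs) <= eps) -> T <= t ->
  Rabs (y t - Fs/k) <= Rabs (y T - Fs/k) * exp (-(k*(t-T))) + eps/k.
Proof.
  intros Hk HT He Hy Hrc HF Ht.
  set (e := exp (-(k*(t-T)))). assert (He0 : 0 < e) by apply exp_pos.
  assert (U : y t - (Fs + eps)/k <= (y T - (Fs + eps)/k) * e).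
  { apply (linear_ode_upper y F); auto. intros u Hu. specialize (HF u Hu).
    apply Rabs_le_inv in HF. replace (k * ((Fs + eps) / k)) with (Fs + eps) by (field; lra). lra. }
  assert (L : - y t - - ((Fs - eps)/k) <= (- y T - - ((Fs - eps)/k)) * e).
  { apply (linear_ode_upper (fun u => - y u) (fun u => - F u)); auto.
    - intros u Hu. eapply derivable_pt_lim_eq; [|apply derivable_pt_lim_opp, Hy, Hu]. ring.
    - apply limit_Ropp. exact Hrc.
    - intros u Hu. specialize (HF u Hu). apply Rabs_le_inv in HF.
      replace (k * - ((Fs - eps) / k)) with (- (Fs - eps)) by (field; lra). lra. }
  assert (ek : 0 <= eps / k) by (apply Rmult_le_pos; [lra| left; apply Rinv_0_lt_compat; lra]).
  replace ((Fs + eps)/k) with (Fs/k + eps/k) in U by (field; lra).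
  replace ((Fs - eps)/k) with (Fs/k - eps/k) in L by (field; lra).
  assert (B1 : (y T - Fs/k) * e <= Rabs (y T - Fs/k) * e)
    by (apply Rmult_le_compat_r; [lra| apply Rle_abs]).
  assert (B2 : - (y T - Fs/k) * e <= Rabs (y T - Fs/k) * e)
    by (apply Rmult_le_compat_r; [lra| rewrite <- Rabs_Ropp; apply Rle_abs]).
  assert (0 <= eps / k * e) by (apply Rmult_le_pos; lra).
  apply Rabs_le. split; nra.
Qed.

Lemma exp_decay_small C k eps x : 0 <= C -> 0 < k -> 0 < eps -> 0 <= x ->
  2 * C / (k * eps) + 1 <= x -> C * exp (-(k * x)) < eps / 2.
Proof.
  intros HC Hk He Hx Hb.
  assert (E1 : 1 + k * x <= exp (k * x)) by apply exp_ineq1_le.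
  assert (E2 : exp (-(k*x)) * exp (k*x) = 1) by (rewrite <- exp_plus, Rplus_opp_l; apply exp_0).
  assert (P1 : 0 < exp (-(k*x))) by apply exp_pos.
  assert (kx : 2 * C / eps + k <= k * x).
  { apply Rmult_le_compat_l with (r := k) in Hb; [|lra].
    replace (k * (2 * C / (k * eps) + 1)) with (2 * C / eps + k) in Hb by (field; lra). exact Hb. }
  set (w := C * exp (-(k*x))). set (z := 2 * C / eps) in *.
  assert (Hz : eps / 2 * z = C) by (unfold z; field; lra).
  assert (0 <= z) by (unfold z; apply Rmult_le_pos; [lra| left; apply Rinv_0_lt_compat; lra]).
  assert (w * (1 + k * x) <= C).
  { apply Rle_trans with (w * exp (k*x)); unfold w.
    apply Rmult_le_compat_l; [apply Rmult_le_pos; lra| exact E1].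
    rewrite Rmult_assoc, E2; lra. }
  assert (0 <= w) by (unfold w; apply Rmult_le_pos; lra).
  nra.
Qed.

Lemma linear_ode_cv y F k Fs : 0 < k ->
  (forall u, 0 < u -> derivable_pt_lim y u (F u - k * y u)) -> cvinf F Fs ->
  cvinf y (Fs / k).
Proof.
  intros Hk Hy HF eps He.
  destruct (HF (eps * k / 2)) as [T1 H1]; [apply Rmult_lt_0_compat; [nra|lra]|].
  set (T := Rmax T1 1). assert (T1le : T1 <= T) by apply Rmax_l. assert (Tpos : 1 <= T) by apply Rmax_r.
  set (C := Rabs (y T - Fs / k)). assert (C0 : 0 <= C) by apply Rabs_pos.
  exists (T + (2 * C / (k * eps) + 1)). intros t Ht.
  assert (0 <= 2 * C / (k * eps)) by (apply Rmult_le_pos; [lra| left; apply Rinv_0_lt_compat; nra]).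
  assert (Rabs (y t - Fs / k) <= C * exp (- (k * (t - T))) + eps * k / 2 / k).
  { apply (linear_ode_estimate y F); auto; [lra| nra| | |lra].
    - apply (right_cont_of_deriv _ _ _ (Hy T ltac:(lra))).
    - intros u Hu. left; apply H1; lra. }
  assert (C * exp (-(k * (t - T))) < eps / 2) by (apply exp_decay_small; lra).
  replace (eps * k / 2 / k) with (eps / 2) in * by (field; lra). lra.
Qed.

Lemma nonincreasing_of_deriv_nonpos L D :
  (forall t, 0 < t -> derivable_pt_lim L t (D t)) -> (forall t, 0 < t -> D t <= 0) ->
  forall s t, 0 < s -> s <= t -> L t <= L s.
Proof.
  intros Hd HD s t Hs Hst. destruct (Req_dec s t) as [->|]; [lra|].
  enough (L t - L s <= 0 * (t - s)) by lra.
  apply (mvt_upper L D); try lra. intros; apply Hd; lra. intros; apply HD; lra.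
  apply (right_cont_of_deriv _ _ (D s)); apply Hd; lra.
Qed.

Lemma inf_of_nonneg (L : R -> R) : (forall t, 0 < t -> 0 <= L t) ->
  exists l, (forall t, 0 < t -> l <= L t) /\
    (forall eta, 0 < eta -> exists t, 0 < t /\ L t < l + eta).
Proof.
  intros H. set (E := fun r => exists t, 0 < t /\ r = - L t).
  destruct (completeness E) as [m [Hub Hl]].
  - exists 0. intros r [t [Ht ->]]. specialize (H t Ht). lra.
  - exists (- L 1). exists 1. split; [lra|auto].
  - exists (- m). split.
    + intros t Ht. assert (- L t <= m) by (apply Hub; exists t; auto). lra.
    + intros eta He. apply NNPP. intro Hn.
      enough (m <= m - eta) by lra. apply Hl. intros r [t [Ht ->]].
      apply Rnot_lt_le. intro Hlt. apply Hn. exists t. split; [auto| lra].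
Qed.

(* If a nonnegative Lyapunov function [L] dissipates at rate [c0 (f - fs)^2] and
   [f] is Lipschitz, then [f] converges to [fs]: a persistent gap would make [L]
   drop by a fixed amount on every interval of fixed length. *)
Lemma cv_of_dissipation L D f fs c0 B : 0 < c0 ->
  (forall t, 0 < t -> derivable_pt_lim L t (D t)) ->
  (forall t, 0 < t -> 0 <= L t) ->
  (forall t, 0 < t -> D t <= - c0 * (f t - fs)^2) ->
  (forall t s, 0 < t -> 0 < s -> Rabs (f t - f s) <= B * Rabs (t - s)) ->
  cvinf f fs.
Proof.
  intros Hc Hd HL HD Hlip eps He.
  set (B' := Rabs B + 1). assert (B'p : 0 < B') by (unfold B'; pose proof (Rabs_pos B); lra).
  assert (HD0 : forall t, 0 < t -> D t <= 0)
    by (intros t Ht; specialize (HD t Ht); pose proof (pow2_ge_0 (f t - fs)); nra).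
  destruct (inf_of_nonneg L HL) as [l [Hl1 Hl2]].
  set (tau := eps / (2 * B')). assert (taup : 0 < tau) by (apply Rdiv_lt_0_compat; lra).
  assert (HBt : B' * tau = eps/2) by (unfold tau; field; lra).
  set (eta := c0 * (eps/2)^2 * tau).
  assert (etap : 0 < eta) by (unfold eta; apply Rmult_lt_0_compat; [apply Rmult_lt_0_compat; [lra| apply pow_lt; lra]| lra]).
  destruct (Hl2 eta etap) as [T0 [HT0 HT0']].
  exists T0. intros t Ht. apply Rnot_le_lt. intro Hbad.
  assert (Hu : forall u, t < u < t + tau -> D u <= - (c0 * (eps/2)^2)).
  { intros u Hu. assert (Q1 : Rabs (f u - f t) <= B * Rabs (u - t)) by (apply Hlip; lra).
    rewrite (Rabs_pos_eq (u - t)) in Q1 by lra.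
    assert (B * (u - t) <= B' * (u - t)) by (unfold B'; pose proof (Rle_abs B); nra).
    assert (B' * (u - t) < B' * tau) by (apply Rmult_lt_compat_l; lra).
    assert (Q3 : Rabs (f t - fs) <= Rabs (f t - f u) + Rabs (f u - fs)).
    { replace (f t - fs) with ((f t - f u) + (f u - fs)) by ring. apply Rabs_triang. }
    rewrite (Rabs_minus_sym (f t) (f u)) in Q3.
    assert ((eps/2)^2 <= (f u - fs)^2) by (rewrite <- (pow2_abs (f u - fs)); nra).
    specialize (HD u ltac:(lra)). nra. }
  assert (M : L (t + tau) - L t <= - (c0 * (eps/2)^2) * (t + tau - t)).
  { apply (mvt_upper L D); try lra. intros; apply Hd; lra. exact Hu.
    apply (right_cont_of_deriv _ _ (D t)); apply Hd; lra. }
  assert (L t <= L T0) by (apply (nonincreasing_of_deriv_nonpos L D); auto).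
  assert (l <= L (t + tau)) by (apply Hl1; lra).
  unfold eta in *. lra.
Qed.

Lemma barbalat f D fs B :
  (forall t, 0 < t -> derivable_pt_lim f t (D t)) -> cvinf f fs ->
  (forall t s, 0 < t -> 0 < s -> Rabs (D t - D s) <= B * Rabs (t - s)) ->
  cvinf D 0.
Proof.
  intros Hd Hf Hlip eps He.
  set (B' := Rabs B + 1). assert (B'p : 0 < B') by (unfold B'; pose proof (Rabs_pos B); lra).
  set (tau := eps / (2 * B')). assert (taup : 0 < tau) by (apply Rdiv_lt_0_compat; lra).
  destruct (Hf (eps * tau / 8)) as [T HT]; [apply Rmult_lt_0_compat; [nra|lra]|].
  exists (Rmax T 1). intros t Ht.
  assert (T1 : T <= t) by (eapply Rle_trans; [apply Rmax_l| exact Ht]).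
  assert (t1 : 1 <= t) by (eapply Rle_trans; [apply Rmax_r| exact Ht]).
  assert (Hclose : forall u, t < u < t + tau -> Rabs (D u - D t) < eps / 2).
  { intros u Hu. eapply Rle_lt_trans; [apply Hlip; lra|].
    rewrite Rabs_pos_eq by lra.
    assert (B * (u - t) <= B' * (u - t)) by (unfold B'; pose proof (Rle_abs B); nra).
    assert (B' * (u - t) < B' * tau) by (apply Rmult_lt_compat_l; lra).
    assert (B' * tau = eps/2) by (unfold tau; field; lra). lra. }
  assert (Hrc : right_cont f t) by (apply (right_cont_of_deriv _ _ (D t)); apply Hd; lra).
  assert (A1 := HT t T1). assert (A2 := HT (t + tau) ltac:(lra)).
  apply Rabs_def2 in A1. apply Rabs_def2 in A2.
  rewrite Rminus_0_r. apply Rabs_def1; apply Rnot_le_lt; intro Hb.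
  - enough (eps / 2 * (t + tau - t) <= f (t + tau) - f t) by nra.
    apply (mvt_lower f D); try lra; auto. intros; apply Hd; lra.
    intros u Hu. specialize (Hclose u Hu). apply Rabs_def2 in Hclose. lra.
  - enough (f (t + tau) - f t <= - (eps / 2) * (t + tau - t)) by nra.
    apply (mvt_upper f D); try lra; auto. intros; apply Hd; lra.
    intros u Hu. specialize (Hclose u Hu). apply Rabs_def2 in Hclose. lra.
Qed.

Definition bnd (f : R -> R) := exists B, forall t, 0 < t -> Rabs (f t) <= B.

Lemma bnd_const c : bnd (fun _ => c).
Proof. exists (Rabs c). intros; lra. Qed.

Lemma bnd_plus f g : bnd f -> bnd g -> bnd (fun t => f t + g t).
Proof.
  intros [B1 H1] [B2 H2]. exists (B1 + B2). intros t Ht.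
  eapply Rle_trans; [apply Rabs_triang|]. specialize (H1 t Ht); specialize (H2 t Ht); lra.
Qed.

Lemma bnd_opp f : bnd f -> bnd (fun t => - f t).
Proof. intros [B H]. exists B. intros t Ht. rewrite Rabs_Ropp. auto. Qed.

Lemma bnd_minus f g : bnd f -> bnd g -> bnd (fun t => f t - g t).
Proof. intros. apply (bnd_plus f (fun t => - g t)); auto. apply bnd_opp; auto. Qed.

Lemma bnd_mult f g : bnd f -> bnd g -> bnd (fun t => f t * g t).
Proof.
  intros [B1 H1] [B2 H2]. exists (B1 * B2). intros t Ht. rewrite Rabs_mult.
  specialize (H1 t Ht); specialize (H2 t Ht).
  apply Rmult_le_compat; auto; apply Rabs_pos.
Qed.

Lemma bnd_ext f g : (forall t, 0 < t -> f t = g t) -> bnd f -> bnd g.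
Proof. intros E [B H]. exists B. intros t Ht. rewrite <- E; auto. Qed.

Lemma bnd_sum1 n (F : nat -> R -> R) : (forall k, (1 <= k <= n)%nat -> bnd (F k)) ->
  bnd (fun t => sum1 n (fun k => F k t)).
Proof.
  induction n; intros H; simpl. apply bnd_const.
  apply (bnd_plus (fun t => sum1 n (fun k => F k t)) (F (S n))). apply IHn; intros; apply H; lia. apply H; lia.
Qed.

Lemma bnd_divc f c : bnd f -> bnd (fun t => f t / c).
Proof. intros. apply (bnd_mult f (fun _ => / c)); auto. apply bnd_const. Qed.

Lemma lipschitz_of_bnd_deriv f D : (forall t, 0 < t -> derivable_pt_lim f t (D t)) -> bnd D ->
  exists B, forall t s, 0 < t -> 0 < s -> Rabs (f t - f s) <= B * Rabs (t - s).
Proof. intros Hd [B HB]. exists B. apply lipschitz_of_bounded_deriv with D; auto. Qed.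

Ltac bnd_tac := repeat (first [ apply bnd_const |
 lazymatch goal with
 | |- bnd (fun t => @?f t + @?g t) => apply (bnd_plus f g)
 | |- bnd (fun t => @?f t - @?g t) => apply (bnd_minus f g)
 | |- bnd (fun t => @?f t * @?g t) => apply (bnd_mult f g)
 | |- bnd (fun t => - @?f t) => apply (bnd_opp f)
 | |- bnd (fun t => @?f t / ?c) => apply (bnd_divc f c)
 end]); auto.

Lemma limit1_in_pos_nbhd m D t : 0 < m t -> limit1_in m D (m t) t ->
  exists a, 0 < a /\ forall s, D s -> Rabs (s - t) < a -> 0 < m s.
Proof.
  intros Hm Hl. rewrite limit1_in_iff in Hl. destruct (Hl (m t) Hm) as [a [Ha H]].
  exists a. split; auto. intros s Ds Hs. specialize (H s Ds Hs). apply Rabs_def2 in H. lra.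
Qed.

Lemma limit1_in_ge_left m c t : 0 < t -> limit1_in m (fun u => 0 <= u) (m t) t ->
  (forall s, 0 <= s < t -> c <= m s) -> c <= m t.
Proof.
  intros Ht Hl Hc. apply Rnot_lt_le. intro Hlt.
  rewrite limit1_in_iff in Hl. destruct (Hl (c - m t)) as [a [Ha H]]; [lra|].
  set (s := Rmax 0 (t - a / 2)).
  assert (s1 : 0 <= s) by apply Rmax_l. assert (s2 : t - a/2 <= s) by apply Rmax_r.
  assert (s3 : s < t) by (unfold s, Rmax; destruct Rle_dec; lra).
  specialize (H s s1 ltac:(rewrite Rabs_left by lra; lra)). apply Rabs_def2 in H.
  specialize (Hc s ltac:(lra)). lra.
Qed.

(* A continuity argument: a lower bound [c] that holds as long as [m] stays
   positive holds forever, since [m] can never reach [0]. *)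
Lemma lower_bound_persists (m : R -> R) c : 0 < c ->
  (forall t, 0 <= t -> limit1_in m (fun u => 0 <= u) (m t) t) -> 0 < m 0 ->
  (forall t, 0 <= t -> (forall s, 0 <= s <= t -> 0 < m s) -> c <= m t) ->
  forall t, 0 <= t -> c <= m t.
Proof.
  intros Hc Hcont H0 Hstep t0 Ht0. apply Hstep; auto.
  set (E := fun r => 0 <= r <= t0 /\ forall s, 0 <= s <= r -> 0 < m s).
  assert (E0 : E 0) by (split; [lra|]; intros s Hs; replace s with 0 by lra; auto).
  destruct (completeness E) as [t1 [Hub Hl]]; [exists t0; intros r [Hr _]; lra| exists 0; auto|].
  assert (t1p : 0 <= t1) by (apply Hub; auto).
  assert (t1le : t1 <= t0) by (apply Hl; intros r [Hr _]; lra).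
  assert (Below : forall s, 0 <= s < t1 -> c <= m s).
  { intros s Hs. apply Hstep; [lra|]. apply NNPP. intro Hn.
    enough (t1 <= s) by lra. apply Hl. intros r [Hr1 Hr2].
    destruct (Rle_dec r s) as [|Hrs]; auto. exfalso; apply Hn. intros s' Hs'. apply Hr2. lra. }
  assert (At : c <= m t1).
  { destruct (Req_dec t1 0) as [->|Hne].
    - apply Hstep; [lra|]. intros s Hs. replace s with 0 by lra. auto.
    - apply limit1_in_ge_left; auto; lra. }
  assert (Pos : forall s, 0 <= s <= t1 -> 0 < m s).
  { intros s Hs. destruct (Req_dec s t1) as [->|]; [lra|]. specialize (Below s ltac:(lra)). lra. }
  destruct (Req_dec t1 t0) as [<-|Hne]; auto.
  destruct (limit1_in_pos_nbhd m _ t1 ltac:(lra) (Hcont t1 t1p)) as [a [Ha H]].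
  set (r := Rmin (t1 + a/2) t0).
  assert (r1 : r <= t1 + a/2) by apply Rmin_l. assert (r2 : r <= t0) by apply Rmin_r.
  assert (r3 : t1 < r) by (apply Rmin_glb_lt; lra).
  enough (E r) by (assert (r <= t1) by (apply Hub; auto); lra).
  split; [lra|]. intros s Hs. destruct (Rle_dec s t1); [apply Pos; lra|].
  apply H; [lra|]. rewrite Rabs_pos_eq; lra.
Qed.

Definition volterra (u : R) := u - 1 - ln u.

Lemma ln_le_pred u : 0 < u -> ln u <= u - 1.
Proof. intros H. assert (K := exp_ineq1_le (ln u)). rewrite exp_ln in K by auto. lra. Qed.

Lemma ln_ge_one_minus_inv u : 0 < u -> 1 - / u <= ln u.
Proof.
  intros H. assert (K := ln_le_pred (/ u) (Rinv_0_lt_compat _ H)). rewrite ln_Rinv in K by auto. lra.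
Qed.

Lemma volterra_nonneg u : 0 < u -> 0 <= volterra u.
Proof. intros H. unfold volterra. pose proof (ln_le_pred u H). lra. Qed.

Lemma volterra_le_sq u : 0 < u -> volterra u <= (u - 1)^2 / u.
Proof.
  intros H. unfold volterra. pose proof (ln_ge_one_minus_inv u H).
  replace ((u-1)^2/u) with (u - 2 + / u) by (field; lra). lra.
Qed.

Lemma volterra_le_lower u G : 0 < u -> volterra u <= G -> exp (-1 - G) <= u.
Proof.
  intros H Hg. unfold volterra in Hg. rewrite <- (exp_ln u) by auto.
  destruct (Req_dec (-1 - G) (ln u)) as [E|E]; [rewrite E; lra|].
  left; apply exp_increasing. lra.
Qed.

Lemma volterra_le_upper u G : 0 < u -> volterra u <= G -> u <= 2 * (G + 1).
Proof.
  intros H Hg. unfold volterra in Hg. assert (K := ln_le_pred (u/2) ltac:(lra)).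
  unfold Rdiv in K. rewrite ln_mult, ln_Rinv in K by lra.
  pose proof (ln_le_pred 2). lra.
Qed.

(* Via [ln u = 2 ln (sqrt u)] and [ln s <= s - 1]. *)
Lemma sq_le_volterra u : 0 < u -> (u - 1)^2 <= 2 * (u + 1) * volterra u.
Proof.
  intros H. set (s := sqrt u). assert (ss : s * s = u) by (apply sqrt_sqrt; lra).
  assert (sp : 0 < s) by (apply sqrt_lt_R0; auto).
  assert (lnu : ln u = 2 * ln s) by (rewrite <- ss, ln_mult by auto; ring).
  assert (K := ln_le_pred s sp).
  assert (G : (s - 1)^2 <= volterra u) by (unfold volterra; rewrite lnu, <- ss; nra).
  rewrite <- ss in *.
  replace ((s*s - 1)^2) with ((s-1)^2 * (s+1)^2) by ring.
  assert ((s+1)^2 <= 2 * (s*s + 1)) by (pose proof (pow2_ge_0 (s-1)); nra).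
  assert (0 <= (s-1)^2) by apply pow2_ge_0.
  nra.
Qed.

Lemma amgm_prod_one (l : list R) : (forall a, In a l -> 0 < a) ->
  fold_right Rmult 1 l = 1 -> INR (length l) <= fold_right Rplus 0 l.
Proof.
  intros Hp Hprod.
  assert (K : forall l, (forall a, In a l -> 0 < a) ->
     0 < fold_right Rmult 1 l /\
     ln (fold_right Rmult 1 l) <= fold_right Rplus 0 l - INR (length l)).
  { clear. induction l as [|a l IH]; intros Hp; simpl.
    - rewrite ln_1. split; lra.
    - destruct IH as [IH1 IH2]; [intros; apply Hp; simpl; auto|].
      assert (0 < a) by (apply Hp; simpl; auto).
      split; [apply Rmult_lt_0_compat; auto|].
      rewrite ln_mult by auto. pose proof (ln_le_pred a H).
      destruct (length l); simpl INR in *; lra. }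
  destruct (K l Hp) as [_ K2]. rewrite Hprod, ln_1 in K2. lra.
Qed.

Lemma amgm3 a b c : 0 < a -> 0 < b -> 0 < c -> a * b * c = 1 -> 3 <= a + b + c.
Proof.
  intros. assert (K := amgm_prod_one [a;b;c]). simpl in K.
  enough (1+1+1 <= a + (b + (c + 0))) by lra. apply K.
  intros x [->|[->|[->|[]]]]; auto. lra.
Qed.

Lemma amgm4 a b c d : 0 < a -> 0 < b -> 0 < c -> 0 < d -> a * b * c * d = 1 -> 4 <= a + b + c + d.
Proof.
  intros. assert (K := amgm_prod_one [a;b;c;d]). simpl in K.
  enough (1+1+1+1 <= a + (b + (c + (d + 0)))) by lra. apply K.
  intros x [->|[->|[->|[->|[]]]]]; auto. lra.
Qed.

Lemma volterra_term_nonneg s v : 0 < s -> 0 < v -> 0 <= s * volterra (v / s).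
Proof. intros Hs Hv. apply Rmult_le_pos; [lra| apply volterra_nonneg, Rdiv_lt_0_compat; auto]. Qed.

Lemma volterra_term_bound w s L v : 0 < w -> 0 < s -> 0 < v ->
  w * (s * volterra (v / s)) <= L -> volterra (v / s) <= L / (w * s).
Proof.
  intros Hw Hs Hv H. apply (Rmult_le_reg_l (w * s)); [nra|].
  replace (w * s * (L / (w * s))) with L by (field; lra). lra.
Qed.

Lemma volterra_term_lower w s L v : 0 < w -> 0 < s -> 0 < v ->
  w * (s * volterra (v / s)) <= L -> s * exp (-1 - L / (w * s)) <= v.
Proof.
  intros Hw Hs Hv H.
  assert (K := volterra_le_lower _ _ (Rdiv_lt_0_compat _ _ Hv Hs) (volterra_term_bound w s L v Hw Hs Hv H)).
  apply (Rmult_le_compat_l s) in K; [|lra]. replace (s * (v / s)) with v in K by (field; lra). exact K.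
Qed.

Lemma volterra_term_upper w s L v : 0 < w -> 0 < s -> 0 < v ->
  w * (s * volterra (v / s)) <= L -> v <= s * (2 * (L / (w * s) + 1)).
Proof.
  intros Hw Hs Hv H.
  assert (K := volterra_le_upper _ _ (Rdiv_lt_0_compat _ _ Hv Hs) (volterra_term_bound w s L v Hw Hs Hv H)).
  apply (Rmult_le_compat_l s) in K; [|lra]. replace (s * (v / s)) with v in K by (field; lra). exact K.
Qed.

Lemma sq_le_abs a b : 0 <= b -> a^2 <= b^2 -> Rabs a <= b.
Proof.
  intros Hb H. rewrite <- (pow2_abs a) in H. pose proof (Rabs_pos a).
  apply Rnot_lt_le. intro Hc. assert (b^2 < Rabs a ^ 2) by nra. lra.
Qed.

Lemma volterra_close u kap del : 0 < u -> 0 <= kap -> 0 < del <= 1 ->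
  volterra u <= kap * del^2 -> Rabs (u - 1) <= (1 + 2 * (2 * kap + 3) * kap) * del.
Proof.
  intros Hu Hk Hd Hg. pose proof (volterra_nonneg u Hu) as g0.
  assert (Hg1 : volterra u <= kap) by (assert (kap * del^2 <= kap * 1) by (apply Rmult_le_compat_l; nra); lra).
  assert (Hup := volterra_le_upper u _ Hu Hg1).
  assert (A : (u - 1)^2 <= (2 * (2 * kap + 3) * kap) * del^2).
  { apply Rle_trans with (2 * (u + 1) * volterra u); [apply sq_le_volterra; auto|].
    replace (2 * (2 * kap + 3) * kap * del^2) with (2 * (2 * kap + 3) * (kap * del^2)) by ring.
    apply Rmult_le_compat; nra. }
  assert (0 <= 2 * (2 * kap + 3) * kap) by nra.
  set (C := 2 * (2 * kap + 3) * kap) in *.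
  apply sq_le_abs; [nra|]. apply Rle_trans with (C * del^2); [exact A|].
  rewrite Rpow_mult_distr. apply Rmult_le_compat_r; [apply pow2_ge_0| nra].
Qed.

Lemma volterra_term_close w s v K del : 0 < w -> 0 < s -> 0 < v -> 0 <= K -> 0 < del <= 1 ->
  w * (s * volterra (v / s)) <= K * del^2 ->
  Rabs (v - s) <= s * (1 + 2 * (2 * (K / (w * s)) + 3) * (K / (w * s))) * del.
Proof.
  intros Hw Hs Hv HK Hd H.
  assert (Hk : 0 <= K / (w * s)) by (apply Rmult_le_pos; [lra| left; apply Rinv_0_lt_compat; nra]).
  assert (Hg := volterra_term_bound w s _ v Hw Hs Hv H).
  replace (K * del^2 / (w * s)) with (K / (w * s) * del^2) in Hg by (field; lra).
  assert (C := volterra_close (v / s) _ del (Rdiv_lt_0_compat _ _ Hv Hs) Hk Hd Hg).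
  replace (v - s) with (s * (v / s - 1)) by (field; lra).
  rewrite Rabs_mult, Rabs_pos_eq, Rmult_assoc by lra. apply Rmult_le_compat_l; lra.
Qed.

Lemma volterra_term_le_of_close v s del : 0 < s -> Rabs (v - s) < del -> del <= s / 2 ->
  s * volterra (v / s) <= 2 / s * del^2.
Proof.
  intros Hs Hv Hd. apply Rabs_def2 in Hv. assert (vp : 0 < v) by lra.
  assert (K := volterra_le_sq (v / s) (Rdiv_lt_0_compat _ _ vp Hs)).
  apply (Rmult_le_compat_l s) in K; [|lra].
  eapply Rle_trans; [exact K|].
  replace (s * ((v / s - 1) ^ 2 / (v / s))) with ((v - s)^2 / v) by (field; lra).
  assert ((v - s)^2 <= del^2) by nra.
  unfold Rdiv. apply Rle_trans with (del^2 * / v).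
  - apply Rmult_le_compat_r; [left; apply Rinv_0_lt_compat; lra| auto].
  - replace (2 * / s * del ^ 2) with (del^2 * / (s/2)) by (field; lra).
    apply Rmult_le_compat_l; [apply pow2_ge_0| apply Rinv_le_contravar; lra].
Qed.

Record admissible (P : Params) : Prop := mkAdmissible {
  adm_n : (1 <= nn P)%nat;
  adm_p : forall k, (1 <= k <= nn P)%nat -> 0 < pk P k;
  adm_d : 0 < dd P; adm_b : 0 < bb P; adm_Phi : 0 < Phis P;
  adm_lam : forall k, (1 <= k <= nn P)%nat -> 0 < lam P k;
  adm_phi : forall k, (1 <= k <= nn P)%nat -> 0 < phi P k;
  adm_mu : forall k, (1 <= k <= nn P)%nat -> 0 < mu P k;
  adm_alpha : 0 < palpha P; adm_beta : 0 < pbeta P; adm_gamma : 0 < pgamma P;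
  adm_eta : 0 < peta P; adm_omega : 0 < pomega P; adm_delta : 0 <= pdelta P <= 1 }.

Definition weight P k := phi P k * pk P k / avgk P.
Definition outflow_I P := pgamma P + pbeta P + dd P.
Definition outflow_V P := dd P + pomega P + palpha P.

Section Model.
Variable P : Params.
Hypothesis G : admissible P.

Lemma INR_pos k : (1 <= k)%nat -> 0 < INR k.
Proof. intros; apply lt_0_INR; lia. Qed.

Lemma avgk_pos : 0 < avgk P.
Proof.
  unfold avgk. apply sum1_pos. apply (adm_n P G). intros k Hk.
  apply Rmult_lt_0_compat. apply INR_pos; lia. apply (adm_p P G); auto.
Qed.

Lemma weight_pos k : (1 <= k <= nn P)%nat -> 0 < weight P k.
Proof.
  intros Hk. unfold weight. apply Rdiv_lt_0_compat; [|apply avgk_pos].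
  apply Rmult_lt_0_compat; [apply (adm_phi P G)| apply (adm_p P G)]; auto.
Qed.

Lemma Theta_weighted s : Theta P s = sum1 (nn P) (fun i => weight P i * sI s i).
Proof.
  unfold Theta. rewrite <- sum1_scal. apply sum1_ext. intros. unfold weight, Rdiv. ring.
Qed.

Lemma Nstar_pos k : (1 <= k <= nn P)%nat -> 0 < Nstar P k.
Proof.
  intros Hk. pose proof (INR_pos k ltac:(lia)). pose proof (adm_b P G). pose proof (adm_Phi P G).
  pose proof (adm_d P G).
  assert (0 < bb P * INR k * Phis P) by (apply Rmult_lt_0_compat; [apply Rmult_lt_0_compat|]; auto).
  unfold Nstar. apply Rdiv_lt_0_compat; lra.
Qed.

Lemma Lam_eq k : (1 <= k <= nn P)%nat -> Lam P k = dd P * Nstar P k.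
Proof.
  intros Hk. pose proof (INR_pos k ltac:(lia)). pose proof (adm_b P G). pose proof (adm_Phi P G).
  pose proof (adm_d P G).
  assert (0 < bb P * INR k * Phis P) by (apply Rmult_lt_0_compat; [apply Rmult_lt_0_compat|]; auto).
  unfold Lam, Nstar. field. lra.
Qed.

Lemma Lam_pos k : (1 <= k <= nn P)%nat -> 0 < Lam P k.
Proof. intros Hk. rewrite Lam_eq by auto. apply Rmult_lt_0_compat; [apply (adm_d P G)| apply Nstar_pos; auto]. Qed.

Lemma Theta_pos s : (forall k, (1 <= k <= nn P)%nat -> 0 < sI s k) -> 0 < Theta P s.
Proof.
  intros H. rewrite Theta_weighted. apply sum1_pos. apply (adm_n P G). intros k Hk.
  apply Rmult_lt_0_compat; [apply weight_pos| apply H]; auto.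
Qed.

Record endemic_facts (E : state) (k : nat) : Prop := mkEndemicFacts {
  ef_S : 0 < sS E k; ef_V : 0 < sV E k; ef_I : 0 < sI E k; ef_Q : 0 < sQ E k; ef_R : 0 < sR E k;
  ef_eqS : Lam P k = lam P k * sS E k * Theta P E - pomega P * sV E k + (mu P k + dd P) * sS E k;
  ef_eqV : mu P k * sS E k = pdelta P * lam P k * sV E k * Theta P E + outflow_V P * sV E k;
  ef_eqI : outflow_I P * sI E k = lam P k * (sS E k + pdelta P * sV E k) * Theta P E;
  ef_eqQ : (peta P + dd P) * sQ E k = pbeta P * sI E k;
  ef_eqR : dd P * sR E k = pgamma P * sI E k + peta P * sQ E k + palpha P * sV E k;
  ef_tot : total E k = Nstar P k }.

Lemma rhs_total s k : sS (rhs P s) k + sV (rhs P s) k + sI (rhs P s) k + sQ (rhs P s) k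
  + sR (rhs P s) k = Lam P k - dd P * total s k.
Proof. unfold rhs, total; simpl. ring. Qed.

Lemma endemic_facts_of E : endemic_equilibrium P E -> forall k, (1 <= k <= nn P)%nat -> endemic_facts E k.
Proof.
  intros [H HT] k Hk.
  destruct (H 0%nat k ltac:(lia) Hk) as [E0 P0]. destruct (H 1%nat k ltac:(lia) Hk) as [E1 P1].
  destruct (H 2%nat k ltac:(lia) Hk) as [E2 P2]. destruct (H 3%nat k ltac:(lia) Hk) as [E3 P3].
  destruct (H 4%nat k ltac:(lia) Hk) as [E4 P4].
  assert (Tot : total E k = Nstar P k).
  { pose proof (rhs_total E k) as Z. cbv beta iota delta [compo] in E0, E1, E2, E3, E4.
    rewrite E0, E1, E2, E3, E4, Lam_eq in Z by auto. pose proof (adm_d P G).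
    apply (Rmult_eq_reg_l (dd P)); lra. }
  simpl in *.
  set (Th := Theta P E) in *. set (S := sS E k) in *. set (V := sV E k) in *.
  set (I := sI E k) in *. set (Q := sQ E k) in *. set (R := sR E k) in *.
  pose proof (Lam_pos k Hk). pose proof (adm_lam P G k Hk) as Hl. pose proof (adm_mu P G k Hk) as Hm.
  pose proof (adm_d P G). pose proof (adm_omega P G). pose proof (adm_alpha P G). pose proof (adm_delta P G).
  pose proof (adm_beta P G). pose proof (adm_gamma P G). pose proof (adm_eta P G).
  assert (HS : 0 < S).
  { destruct P0 as [|Z0]; auto. rewrite <- Z0 in E0.
    assert (0 <= pomega P * V) by (apply Rmult_le_pos; lra). nra. }
  assert (HV : 0 < V).
  { destruct P1 as [|Z1]; auto. rewrite <- Z1 in E1. assert (0 < mu P k * S) by nra. nra. }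
  assert (HI : 0 < I).
  { destruct P2 as [|Z2]; auto. rewrite <- Z2 in E2.
    assert (0 < lam P k * S * Th) by (apply Rmult_lt_0_compat; [nra|auto]).
    assert (0 <= pdelta P * lam P k * V * Th) by (apply Rmult_le_pos; [apply Rmult_le_pos; nra| lra]). nra. }
  assert (HQ : 0 < Q) by (destruct P3 as [|Z3]; auto; rewrite <- Z3 in E3; nra).
  assert (HR : 0 < R) by (destruct P4 as [|Z4]; auto; rewrite <- Z4 in E4; nra).
  unfold Th, S, V, I, Q, R in *. constructor; auto; unfold outflow_V, outflow_I; lra.
Qed.

End Model.

(* In the ratios [x = S / S*], [y = V / V*], [u = I / I*], [z = Theta / Theta*]. *)
Definition lyap_remainder (lam d om al de Ss Vs Ths x y u z : R) :=
  lam*Ss*Ths*(3 - 1/x - x*z/u - u/z) + de*lam*Vs*Ths*(4 - 1/x - x/y - y*z/u - u/z)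
   - om*Vs*(x-y)^2/(x*y) + (d+al)*Vs*(3 - y - x/y - 1/x) - d*Ss*(x-1)^2/x.

Lemma lyap_deriv_k_identity (S V I Th Ss Vs Is Ths lam mu d om al de a Lm : R) :
 0 < Ss -> 0 < Vs -> 0 < Is -> 0 < Ths -> 0 < S -> 0 < V -> 0 < I -> 0 < Th ->
 Lm = lam*Ss*Ths - om*Vs + (mu+d)*Ss ->
 mu*Ss = de*lam*Vs*Ths + (d+om+al)*Vs ->
 a*Is = lam*(Ss + de*Vs)*Ths ->
 (1 - Ss/S)*(Lm - lam*S*Th + om*V - (mu+d)*S) + (1 - Vs/V)*(mu*S - de*lam*V*Th - (d+om+al)*V)
   + (1 - Is/I)*(lam*S*Th + de*lam*V*Th - a*I)
 = lyap_remainder lam d om al de Ss Vs Ths (S/Ss) (V/Vs) (I/Is) (Th/Ths)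
   + a*Is*(Th/Ths - I/Is + (I/Is)/(Th/Ths) - 1).
Proof.
  intros. subst Lm. unfold lyap_remainder.
  assert (Hmu : mu = (de*lam*Vs*Ths + (d+om+al)*Vs)/Ss) by (apply (Rmult_eq_reg_r Ss); [rewrite H8; field|]; lra).
  assert (Ha : a = lam*(Ss + de*Vs)*Ths/Is) by (apply (Rmult_eq_reg_r Is); [rewrite H9; field|]; lra).
  rewrite Hmu, Ha. field. repeat split; lra.
Qed.

Lemma lyap_remainder_le lam d om al de Ss Vs Ths x y u z :
  0 <= lam -> 0 <= d -> 0 <= al -> 0 <= de -> 0 < Ss -> 0 < Vs -> 0 < Ths ->
  0 < x -> 0 < y -> 0 < u -> 0 < z ->
  lyap_remainder lam d om al de Ss Vs Ths x y u z <= - (d*Ss*(x-1)^2/x + om*Vs*(x-y)^2/(x*y)).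
Proof.
  intros. unfold lyap_remainder.
  assert (A1 : 3 <= 1/x + x*z/u + u/z).
  { apply amgm3; try (apply Rdiv_lt_0_compat; try apply Rmult_lt_0_compat; lra). field; lra. }
  assert (A2 : 4 <= 1/x + x/y + y*z/u + u/z).
  { apply amgm4; try (apply Rdiv_lt_0_compat; try apply Rmult_lt_0_compat; lra). field; lra. }
  assert (A3 : 3 <= y + x/y + 1/x).
  { apply amgm3; try (apply Rdiv_lt_0_compat; try apply Rmult_lt_0_compat; lra). lra. field; lra. }
  assert (0 <= lam*Ss*Ths) by (apply Rmult_le_pos; [apply Rmult_le_pos|]; lra).
  assert (0 <= de*lam*Vs*Ths) by (repeat apply Rmult_le_pos; lra).
  assert (0 <= (d+al)*Vs) by (apply Rmult_le_pos; lra).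
  assert (lam*Ss*Ths*(3 - 1/x - x*z/u - u/z) <= 0) by nra.
  assert (de*lam*Vs*Ths*(4 - 1/x - x/y - y*z/u - u/z) <= 0) by nra.
  assert ((d+al)*Vs*(3 - y - x/y - 1/x) <= 0) by nra.
  lra.
Qed.

Definition lyap_k E k X := sS E k * volterra (sS X k / sS E k) + sV E k * volterra (sV X k / sV E k)
  + sI E k * volterra (sI X k / sI E k).
Definition lyap P E X := sum1 (nn P) (fun k => weight P k * lyap_k E k X).
Definition lyap_deriv_k P E k X := (1 - sS E k / sS X k) * sS (rhs P X) k + (1 - sV E k / sV X k) * sV (rhs P X) k
  + (1 - sI E k / sI X k) * sI (rhs P X) k.
Definition lyap_deriv P E X := sum1 (nn P) (fun k => weight P k * lyap_deriv_k P E k X).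
Definition dissipation_k P E k X :=
  dd P * sS E k * (sS X k / sS E k - 1)^2 / (sS X k / sS E k)
  + pomega P * sV E k * (sS X k / sS E k - sV X k / sV E k)^2 / ((sS X k / sS E k) * (sV X k / sV E k)).
Definition SVI_pos P X := forall k, (1 <= k <= nn P)%nat -> 0 < sS X k /\ 0 < sV X k /\ 0 < sI X k.

Section Lyapunov.
Variable P : Params.
Hypothesis G : admissible P.
Variable E : state.
Hypothesis HE : endemic_equilibrium P E.

Lemma dissipation_k_ge X k : (1 <= k <= nn P)%nat -> SVI_pos P X ->
  dd P * (sS X k - sS E k)^2 / sS X k <= dissipation_k P E k X /\
  pomega P * sV E k * (sS X k / sS E k - sV X k / sV E k)^2 / ((sS X k / sS E k) * (sV X k / sV E k))
    <= dissipation_k P E k X.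
Proof.
  intros Hk HX. destruct (endemic_facts_of P G E HE k Hk). destruct (HX k Hk) as [a [b c]].
  pose proof (adm_d P G). pose proof (adm_omega P G).
  assert (x0 : 0 < sS X k / sS E k) by (apply Rdiv_lt_0_compat; lra).
  assert (y0 : 0 < sV X k / sV E k) by (apply Rdiv_lt_0_compat; lra).
  assert (0 <= dd P * sS E k * (sS X k / sS E k - 1)^2 / (sS X k / sS E k)).
  { apply Rmult_le_pos; [apply Rmult_le_pos; [nra| apply pow2_ge_0]| left; apply Rinv_0_lt_compat; lra]. }
  assert (0 <= pomega P * sV E k * (sS X k / sS E k - sV X k / sV E k)^2 / ((sS X k / sS E k) * (sV X k / sV E k))).
  { apply Rmult_le_pos; [apply Rmult_le_pos; [nra| apply pow2_ge_0]| left; apply Rinv_0_lt_compat; nra]. }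
  unfold dissipation_k. split; [|lra].
  replace (dd P * (sS X k - sS E k)^2 / sS X k) with (dd P * sS E k * (sS X k / sS E k - 1)^2 / (sS X k / sS E k))
    by (field; lra). lra.
Qed.

Lemma dissipation_k_nonneg X k : (1 <= k <= nn P)%nat -> SVI_pos P X -> 0 <= dissipation_k P E k X.
Proof.
  intros Hk HX. destruct (dissipation_k_ge X k Hk HX) as [H _]. destruct (HX k Hk) as [a _].
  eapply Rle_trans; [|exact H]. pose proof (adm_d P G).
  apply Rmult_le_pos; [apply Rmult_le_pos; [lra| apply pow2_ge_0]| left; apply Rinv_0_lt_compat; lra].
Qed.

(* Weighted by [weight] and summed over [k], these terms cancel because
   [sum_k weight k * I_k = Theta]. *)
Definition lyap_coupling_k X k :=
  outflow_I P * (Theta P X / Theta P E * (weight P k * sI E k) - weight P k * sI X k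
    + Theta P E / Theta P X * (weight P k * sI X k) - weight P k * sI E k).

Lemma lyap_deriv_k_eq X k : (1 <= k <= nn P)%nat -> SVI_pos P X -> 0 < Theta P X ->
  weight P k * lyap_deriv_k P E k X =
  weight P k * lyap_remainder (lam P k) (dd P) (pomega P) (palpha P) (pdelta P) (sS E k) (sV E k)
    (Theta P E) (sS X k / sS E k) (sV X k / sV E k) (sI X k / sI E k) (Theta P X / Theta P E)
  + lyap_coupling_k X k.
Proof.
  intros Hk HX ThX. pose proof (proj2 HE) as ThE.
  destruct (endemic_facts_of P G E HE k Hk) as [eS eV eI _ _ e1 e2 e3 _ _ _].
  destruct (HX k Hk) as [a [b c]].
  replace (lyap_coupling_k X k) with (weight P k * (outflow_I P * sI E k *
      (Theta P X / Theta P E - sI X k / sI E k + (sI X k / sI E k) / (Theta P X / Theta P E) - 1)))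
    by (unfold lyap_coupling_k; field; repeat split; lra).
  rewrite <- Rmult_plus_distr_l. f_equal.
  rewrite <- (lyap_deriv_k_identity _ _ _ _ _ _ _ _ (lam P k) (mu P k) (dd P) (pomega P) (palpha P)
    (pdelta P) (outflow_I P) (Lam P k)); auto.
Qed.

Lemma sum1_lyap_coupling X : 0 < Theta P X -> sum1 (nn P) (lyap_coupling_k X) = 0.
Proof.
  intros ThX. pose proof (proj2 HE) as ThE. unfold lyap_coupling_k.
  rewrite sum1_scal, sum1_minus, sum1_plus, sum1_minus, !sum1_scal, <- !(Theta_weighted P).
  field. lra.
Qed.

Lemma lyap_deriv_le X : SVI_pos P X ->
  lyap_deriv P E X <= - sum1 (nn P) (fun k => weight P k * dissipation_k P E k X).
Proof.
  intros HX.
  assert (ThX : 0 < Theta P X) by (apply (Theta_pos P G); intros k Hk; apply HX; auto).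
  pose proof (proj2 HE) as ThE.
  unfold lyap_deriv. rewrite (sum1_ext _ _ _ (fun k Hk => lyap_deriv_k_eq X k Hk HX ThX)).
  rewrite sum1_plus, sum1_lyap_coupling, Rplus_0_r by auto.
  rewrite <- (Rmult_1_l (sum1 _ (fun k => weight P k * dissipation_k P E k X))).
  rewrite Ropp_mult_distr_l, <- sum1_scal.
  apply sum1_le. intros k Hk.
  destruct (endemic_facts_of P G E HE k Hk). destruct (HX k Hk) as [a [b c]].
  pose proof (weight_pos P G k Hk). pose proof (adm_lam P G k Hk).
  pose proof (adm_d P G). pose proof (adm_alpha P G). pose proof (adm_delta P G).
  enough (lyap_remainder (lam P k) (dd P) (pomega P) (palpha P) (pdelta P) (sS E k) (sV E k) (Theta P E)
    (sS X k / sS E k) (sV X k / sV E k) (sI X k / sI E k) (Theta P X / Theta P E) <= - dissipation_k P E k X)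
    by nra.
  unfold dissipation_k. apply lyap_remainder_le; try (apply Rdiv_lt_0_compat); lra.
Qed.

End Lyapunov.

Lemma derivable_pt_lim_volterra_term f c t l : 0 < c -> 0 < f t -> derivable_pt_lim f t l ->
  derivable_pt_lim (fun u => c * volterra (f u / c)) t ((1 - c / f t) * l).
Proof.
  intros Hc Hf Hd.
  assert (Hh := derivable_pt_lim_mult f (fct_cte (/c)) t _ _ Hd (derivable_pt_lim_const (/c) t)).
  assert (hp : 0 < (f * fct_cte (/c))%F t).
  { unfold mult_fct, fct_cte. apply Rmult_lt_0_compat; auto. apply Rinv_0_lt_compat; auto. }
  assert (H := derivable_pt_lim_scal _ c t _ (derivable_pt_lim_minus _ _ t _ _
     (derivable_pt_lim_minus _ _ t _ _ Hh (derivable_pt_lim_const 1 t))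
     (derivable_pt_lim_comp _ ln t _ _ Hh (derivable_pt_lim_ln _ hp)))).
  eapply derivable_pt_lim_eq; [|exact H].
  unfold mult_fct, fct_cte, minus_fct. field. split; lra.
Qed.

Lemma lim_volterra_term f D c t : limit1_in f D (f t) t -> 0 < f t -> 0 < c ->
  limit1_in (fun u => c * volterra (f u / c)) D (c * volterra (f t / c)) t.
Proof.
  intros Hl Hf Hc. apply (lim_comp f (fun v => c * volterra (v / c))); auto.
  apply derivable_continuous_pt. eexists.
  apply (derivable_pt_lim_volterra_term id c (f t) 1 Hc Hf (derivable_pt_lim_id _)).
Qed.

Lemma solution_deriv P x j k t : is_solution P x -> (j <= 4)%nat -> (1 <= k <= nn P)%nat -> 0 < t ->
  derivable_pt_lim (fun u => compo j (x u) k) t (compo j (rhs P (x t)) k).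
Proof. intros H Hj Hk Ht. apply (proj1 (H j k Hj Hk)); auto. Qed.

Lemma solution_lim P x j k t : is_solution P x -> (j <= 4)%nat -> (1 <= k <= nn P)%nat -> 0 <= t ->
  limit1_in (fun u => compo j (x u) k) (fun u => 0 <= u) (compo j (x t) k) t.
Proof.
  intros H Hj Hk Ht. destruct (Req_dec t 0) as [->|].
  - apply (proj2 (H j k Hj Hk)).
  - assert (0 < t) by (destruct Ht; auto; congruence). eapply limit1_in_of_deriv. apply (solution_deriv P x j k t); auto.
Qed.

Section Trajectory.
Variable P : Params.
Hypothesis G : admissible P.
Variable E : state.
Hypothesis HE : endemic_equilibrium P E.
Variable x : R -> state.
Hypothesis Hx : is_solution P x.

Lemma dS k t : (1 <= k <= nn P)%nat -> 0 < t -> derivable_pt_lim (fun u => sS (x u) k) t (sS (rhs P (x t)) k).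
Proof. intros. apply (solution_deriv P x 0 k t); auto; lia. Qed.
Lemma dV k t : (1 <= k <= nn P)%nat -> 0 < t -> derivable_pt_lim (fun u => sV (x u) k) t (sV (rhs P (x t)) k).
Proof. intros. apply (solution_deriv P x 1 k t); auto; lia. Qed.
Lemma dI k t : (1 <= k <= nn P)%nat -> 0 < t -> derivable_pt_lim (fun u => sI (x u) k) t (sI (rhs P (x t)) k).
Proof. intros. apply (solution_deriv P x 2 k t); auto; lia. Qed.
Lemma dQ k t : (1 <= k <= nn P)%nat -> 0 < t -> derivable_pt_lim (fun u => sQ (x u) k) t (sQ (rhs P (x t)) k).
Proof. intros. apply (solution_deriv P x 3 k t); auto; lia. Qed.
Lemma dR k t : (1 <= k <= nn P)%nat -> 0 < t -> derivable_pt_lim (fun u => sR (x u) k) t (sR (rhs P (x t)) k).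
Proof. intros. apply (solution_deriv P x 4 k t); auto; lia. Qed.
Lemma lS k t : (1 <= k <= nn P)%nat -> 0 <= t -> limit1_in (fun u => sS (x u) k) (fun u => 0 <= u) (sS (x t) k) t.
Proof. intros. apply (solution_lim P x 0 k t); auto; lia. Qed.
Lemma lV k t : (1 <= k <= nn P)%nat -> 0 <= t -> limit1_in (fun u => sV (x u) k) (fun u => 0 <= u) (sV (x t) k) t.
Proof. intros. apply (solution_lim P x 1 k t); auto; lia. Qed.
Lemma lI k t : (1 <= k <= nn P)%nat -> 0 <= t -> limit1_in (fun u => sI (x u) k) (fun u => 0 <= u) (sI (x t) k) t.
Proof. intros. apply (solution_lim P x 2 k t); auto; lia. Qed.
Lemma lQ k t : (1 <= k <= nn P)%nat -> 0 <= t -> limit1_in (fun u => sQ (x u) k) (fun u => 0 <= u) (sQ (x t) k) t.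
Proof. intros. apply (solution_lim P x 3 k t); auto; lia. Qed.
Lemma lR k t : (1 <= k <= nn P)%nat -> 0 <= t -> limit1_in (fun u => sR (x u) k) (fun u => 0 <= u) (sR (x t) k) t.
Proof. intros. apply (solution_lim P x 4 k t); auto; lia. Qed.

Lemma derivable_total k t : (1 <= k <= nn P)%nat -> 0 < t ->
  derivable_pt_lim (fun u => total (x u) k) t (Lam P k - dd P * total (x t) k).
Proof.
  intros Hk Ht. rewrite <- rhs_total. unfold total.
  repeat apply derivable_pt_lim_plus; [apply dS| apply dV| apply dI| apply dQ| apply dR]; auto.
Qed.

Lemma right_cont_total k : (1 <= k <= nn P)%nat -> right_cont (fun u => total (x u) k) 0.
Proof.
  intros Hk. unfold right_cont, total.
  repeat apply lim_plus; [apply lS| apply lV| apply lI| apply lQ| apply lR]; auto; lra.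
Qed.

Lemma derivable_lyap t : 0 < t -> SVI_pos P (x t) ->
  derivable_pt_lim (fun u => lyap P E (x u)) t (lyap_deriv P E (x t)).
Proof.
  intros Ht Hp. unfold lyap, lyap_deriv.
  apply (derivable_pt_lim_sum1 (nn P) (fun k u => weight P k * lyap_k E k (x u))). intros k Hk.
  destruct (endemic_facts_of P G E HE k Hk) as [eS eV eI _ _ _ _ _ _ _ _]. destruct (Hp k Hk) as [a [b c]].
  apply (derivable_pt_lim_scal (fun u => lyap_k E k (x u))).
  unfold lyap_k, lyap_deriv_k.
  set (gS := fun u => sS E k * volterra (sS (x u) k / sS E k)).
  set (gV := fun u => sV E k * volterra (sV (x u) k / sV E k)).
  set (gI := fun u => sI E k * volterra (sI (x u) k / sI E k)).
  apply (derivable_pt_lim_plus (fun u => gS u + gV u) gI); [apply (derivable_pt_lim_plus gS gV)|];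
    [apply (derivable_pt_lim_volterra_term (fun u => sS (x u) k)); auto; apply dS
    |apply (derivable_pt_lim_volterra_term (fun u => sV (x u) k)); auto; apply dV
    |apply (derivable_pt_lim_volterra_term (fun u => sI (x u) k)); auto; apply dI]; auto.
Qed.

Lemma lim_lyap t : 0 <= t -> SVI_pos P (x t) ->
  limit1_in (fun u => lyap P E (x u)) (fun u => 0 <= u) (lyap P E (x t)) t.
Proof.
  intros Ht Hp. unfold lyap.
  apply (lim_sum1 (nn P) (fun k u => weight P k * lyap_k E k (x u))). intros k Hk.
  destruct (endemic_facts_of P G E HE k Hk) as [eS eV eI _ _ _ _ _ _ _ _]. destruct (Hp k Hk) as [a [b c]].
  apply (lim_mult (fun _ => weight P k) (fun u => lyap_k E k (x u))). apply lim_const.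
  unfold lyap_k.
  set (gS := fun u => sS E k * volterra (sS (x u) k / sS E k)).
  set (gV := fun u => sV E k * volterra (sV (x u) k / sV E k)).
  set (gI := fun u => sI E k * volterra (sI (x u) k / sI E k)).
  apply (lim_plus (fun u => gS u + gV u) gI); [apply (lim_plus gS gV)|];
    [apply (lim_volterra_term (fun u => sS (x u) k)); auto; apply lS
    |apply (lim_volterra_term (fun u => sV (x u) k)); auto; apply lV
    |apply (lim_volterra_term (fun u => sI (x u) k)); auto; apply lI]; auto.
Qed.

Lemma lyap_terms_nonneg k X : (1 <= k <= nn P)%nat -> SVI_pos P X ->
  0 <= sS E k * volterra (sS X k / sS E k) /\ 0 <= sV E k * volterra (sV X k / sV E k) /\
  0 <= sI E k * volterra (sI X k / sI E k).
Proof.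
  intros Hk Hp. destruct (endemic_facts_of P G E HE k Hk) as [eS eV eI _ _ _ _ _ _ _ _].
  destruct (Hp k Hk) as [a [b c]]. repeat split; apply volterra_term_nonneg; auto.
Qed.

Lemma lyap_k_nonneg k X : (1 <= k <= nn P)%nat -> SVI_pos P X -> 0 <= lyap_k E k X.
Proof. intros Hk Hp. pose proof (lyap_terms_nonneg k X Hk Hp). unfold lyap_k. lra. Qed.

Lemma lyap_nonneg X : SVI_pos P X -> 0 <= lyap P E X.
Proof.
  intros Hp. apply sum1_nonneg. intros k Hk. apply Rmult_le_pos. left; apply (weight_pos P G); auto.
  apply lyap_k_nonneg; auto.
Qed.

Lemma lyap_k_le k X : (1 <= k <= nn P)%nat -> SVI_pos P X -> weight P k * lyap_k E k X <= lyap P E X.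
Proof.
  intros Hk Hp. apply (sum1_term_le (nn P) (fun k => weight P k * lyap_k E k X)); auto.
  intros j Hj. apply Rmult_le_pos. left; apply (weight_pos P G); auto. apply lyap_k_nonneg; auto.
Qed.

Lemma lyap_terms_le k X : (1 <= k <= nn P)%nat -> SVI_pos P X ->
  weight P k * (sS E k * volterra (sS X k / sS E k)) <= lyap P E X /\
  weight P k * (sV E k * volterra (sV X k / sV E k)) <= lyap P E X /\
  weight P k * (sI E k * volterra (sI X k / sI E k)) <= lyap P E X.
Proof.
  intros Hk Hp. pose proof (lyap_k_le k X Hk Hp). pose proof (lyap_terms_nonneg k X Hk Hp).
  pose proof (weight_pos P G k Hk). unfold lyap_k in *. repeat split; nra.
Qed.

Lemma lyap_deriv_nonpos X : SVI_pos P X -> lyap_deriv P E X <= 0.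
Proof.
  intros Hp. eapply Rle_trans. apply (lyap_deriv_le P G E HE X Hp).
  assert (0 <= sum1 (nn P) (fun k => weight P k * dissipation_k P E k X)); [|lra].
  apply sum1_nonneg. intros k Hk. apply Rmult_le_pos. left; apply (weight_pos P G); auto.
  apply (dissipation_k_nonneg P G E HE); auto.
Qed.

Lemma lyap_nonincreasing t : 0 <= t -> (forall s, 0 <= s <= t -> SVI_pos P (x s)) -> lyap P E (x t) <= lyap P E (x 0).
Proof.
  intros Ht Hp. destruct (Req_dec t 0) as [->|]; [lra|].
  assert (Htp : 0 < t) by (destruct Ht; auto; congruence).
  assert (lyap P E (x t) - lyap P E (x 0) <= 0 * (t - 0)); [|lra].
  apply (mvt_upper (fun u => lyap P E (x u)) (fun u => lyap_deriv P E (x u))). lra.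
  intros u Hu. apply derivable_lyap. lra. apply Hp; lra.
  intros u Hu. apply lyap_deriv_nonpos. apply Hp; lra.
  unfold right_cont. apply lim_lyap. lra. apply Hp; lra.
Qed.

End Trajectory.

Section Invariance.
Variable P : Params.
Hypothesis G : admissible P.
Variable E : state.
Hypothesis HE : endemic_equilibrium P E.
Variable x : R -> state.
Hypothesis Hx : is_solution P x.

Definition lower_k (L0 : R) k :=
  Rmin (sS E k * exp (-1 - L0 / (weight P k * sS E k)))
   (Rmin (sV E k * exp (-1 - L0 / (weight P k * sV E k))) (sI E k * exp (-1 - L0 / (weight P k * sI E k)))).

Lemma lower_k_pos L0 k : (1 <= k <= nn P)%nat -> 0 < lower_k L0 k.
Proof.
  intros Hk. destruct (endemic_facts_of P G E HE k Hk) as [eS eV eI _ _ _ _ _ _ _ _].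
  unfold lower_k. repeat apply Rmin_glb_lt; apply Rmult_lt_0_compat; auto; apply exp_pos.
Qed.

Lemma lower_k_le X L0 k : (1 <= k <= nn P)%nat -> SVI_pos P X -> lyap P E X <= L0 ->
  lower_k L0 k <= Rmin (sS X k) (Rmin (sV X k) (sI X k)).
Proof.
  intros Hk Hp HL. destruct (endemic_facts_of P G E HE k Hk) as [eS eV eI _ _ _ _ _ _ _ _].
  destruct (Hp k Hk) as [a [b c]]. pose proof (weight_pos P G k Hk).
  destruct (lyap_terms_le P G E HE k X Hk Hp) as [p1 [p2 p3]].
  unfold lower_k. repeat apply Rmin_le_compat; apply volterra_term_lower; auto; lra.
Qed.

Definition min_SVI u := min1 (nn P) (fun k => Rmin (sS (x u) k) (Rmin (sV (x u) k) (sI (x u) k))).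

Lemma SVI_pos_of_min_SVI u : 0 < min_SVI u -> SVI_pos P (x u).
Proof.
  intros H k Hk. assert (K := min1_le (nn P) (fun k => Rmin (sS (x u) k) (Rmin (sV (x u) k) (sI (x u) k))) k Hk).
  fold (min_SVI u) in K. pose proof (Rmin_l (sS (x u) k) (Rmin (sV (x u) k) (sI (x u) k))).
  pose proof (Rmin_r (sS (x u) k) (Rmin (sV (x u) k) (sI (x u) k))).
  pose proof (Rmin_l (sV (x u) k) (sI (x u) k)). pose proof (Rmin_r (sV (x u) k) (sI (x u) k)). lra.
Qed.

Lemma lim_min_SVI t : 0 <= t -> limit1_in min_SVI (fun u => 0 <= u) (min_SVI t) t.
Proof.
  intros Ht. apply (lim_min1 (nn P) (fun k u => Rmin (sS (x u) k) (Rmin (sV (x u) k) (sI (x u) k)))).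
  intros k Hk. apply (lim_Rmin (fun u => sS (x u) k) (fun u => Rmin (sV (x u) k) (sI (x u) k))).
  - apply (lS P x Hx); auto.
  - apply (lim_Rmin (fun u => sV (x u) k) (fun u => sI (x u) k)); [apply (lV P x Hx)| apply (lI P x Hx)]; auto.
Qed.

(* As long as [S, V, I > 0], the Lyapunov function does not increase, and a
   bounded Lyapunov function keeps [S, V, I] away from [0]. *)
Lemma SVI_pos_lyap_le : SVI_pos P (x 0) ->
  forall t, 0 <= t -> SVI_pos P (x t) /\ lyap P E (x t) <= lyap P E (x 0).
Proof.
  intros H0. set (c := min1 (nn P) (lower_k (lyap P E (x 0)))).
  assert (Hm : forall t, 0 <= t -> c <= min_SVI t).
  { apply lower_bound_persists; [apply min1_pos; intros; apply lower_k_pos; auto| exact lim_min_SVI| |].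
    - apply min1_pos. intros k Hk. destruct (H0 k Hk) as [a [b d]]. repeat apply Rmin_glb_lt; auto.
    - intros t Ht Hs.
      assert (Hp : forall s, 0 <= s <= t -> SVI_pos P (x s)) by (intros; apply SVI_pos_of_min_SVI; auto).
      apply min1_le_compat. intros k Hk. apply lower_k_le; [auto| apply Hp; lra|].
      apply (lyap_nonincreasing P G E HE x Hx t Ht Hp). }
  assert (cpos : 0 < c) by (apply min1_pos; intros; apply lower_k_pos; auto).
  intros t Ht. assert (Hp : forall s, 0 <= s <= t -> SVI_pos P (x s)).
  { intros s Hs. apply SVI_pos_of_min_SVI. specialize (Hm s ltac:(lra)). lra. }
  split; [apply Hp; lra| apply (lyap_nonincreasing P G E HE x Hx); auto].
Qed.

Lemma total_invariant : (forall k, (1 <= k <= nn P)%nat -> total (x 0) k = Nstar P k) ->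
  forall k t, (1 <= k <= nn P)%nat -> 0 <= t -> total (x t) k = Nstar P k.
Proof.
  intros H0 k t Hk Ht. pose proof (adm_d P G) as Hd.
  assert (Hdt : forall u, 0 < u -> derivable_pt_lim (fun u => total (x u) k) u
     (dd P * Nstar P k - dd P * total (x u) k)).
  { intros u Hu. rewrite <- (Lam_eq P G k Hk). apply (derivable_total P x Hx); auto. }
  assert (H := linear_ode_estimate (fun u => total (x u) k) (fun _ => dd P * Nstar P k) (dd P)
     (dd P * Nstar P k) 0 0 t Hd (Rle_refl 0) (Rle_refl 0) Hdt (right_cont_total P x Hx k Hk)).
  assert (Rabs (total (x t) k - Nstar P k) <= 0); [|apply Rabs_le_inv in H1; lra].
  replace (dd P * Nstar P k / dd P) with (Nstar P k) in H by (field; lra).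
  replace (0 / dd P) with 0 in H by (field; lra).
  rewrite (H0 k Hk), (Rminus_diag (Nstar P k)), Rabs_R0, Rmult_0_l, Rplus_0_l in H.
  apply H; [intros; rewrite Rminus_diag, Rabs_R0; lra| lra].
Qed.

End Invariance.

Section Attractivity.
Variable P : Params.
Hypothesis G : admissible P.
Variable E : state.
Hypothesis HE : endemic_equilibrium P E.
Variable x : R -> state.
Hypothesis Hx : is_solution P x.
Hypothesis Hpd : positive_data P (x 0).

Lemma SVI_pos_init : SVI_pos P (x 0).
Proof. intros k Hk. destruct (Hpd k Hk) as [H _]. repeat split; [apply (H 0%nat)|apply (H 1%nat)|apply (H 2%nat)]; lia. Qed.

Lemma SVI_pos_t t : 0 <= t -> SVI_pos P (x t).
Proof. intros. apply (SVI_pos_lyap_le P G E HE x Hx SVI_pos_init t H). Qed.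

Let L0 := lyap P E (x 0).

Lemma lyap_le_init t : 0 <= t -> lyap P E (x t) <= L0.
Proof. intros. apply (SVI_pos_lyap_le P G E HE x Hx SVI_pos_init t H). Qed.

Definition S_sup k := sS E k * (2 * (L0 / (weight P k * sS E k) + 1)).
Definition V_sup k := sV E k * (2 * (L0 / (weight P k * sV E k) + 1)).
Definition I_sup k := sI E k * (2 * (L0 / (weight P k * sI E k) + 1)).

Lemma SVI_le_sup k t : (1 <= k <= nn P)%nat -> 0 <= t ->
  sS (x t) k <= S_sup k /\ sV (x t) k <= V_sup k /\ sI (x t) k <= I_sup k.
Proof.
  intros Hk Ht. assert (Hp := SVI_pos_t t Ht).
  destruct (endemic_facts_of P G E HE k Hk) as [eS eV eI _ _ _ _ _ _ _ _].
  destruct (Hp k Hk) as [a [b c]]. pose proof (weight_pos P G k Hk). pose proof (lyap_le_init t Ht).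
  destruct (lyap_terms_le P G E HE k (x t) Hk Hp) as [p1 [p2 p3]].
  unfold S_sup, V_sup, I_sup. repeat split; apply volterra_term_upper; auto; lra.
Qed.

Lemma bnd_S k : (1 <= k <= nn P)%nat -> bnd (fun t => sS (x t) k).
Proof.
  intros Hk. exists (S_sup k). intros t Ht. destruct (SVI_pos_t t ltac:(lra) k Hk) as [a _].
  rewrite Rabs_pos_eq by lra. apply SVI_le_sup; auto; lra.
Qed.

Lemma bnd_V k : (1 <= k <= nn P)%nat -> bnd (fun t => sV (x t) k).
Proof.
  intros Hk. exists (V_sup k). intros t Ht. destruct (SVI_pos_t t ltac:(lra) k Hk) as [_ [a _]].
  rewrite Rabs_pos_eq by lra. apply SVI_le_sup; auto; lra.
Qed.

Lemma bnd_I k : (1 <= k <= nn P)%nat -> bnd (fun t => sI (x t) k).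
Proof.
  intros Hk. exists (I_sup k). intros t Ht. destruct (SVI_pos_t t ltac:(lra) k Hk) as [_ [_ a]].
  rewrite Rabs_pos_eq by lra. apply SVI_le_sup; auto; lra.
Qed.

Lemma bnd_Theta : bnd (fun t => Theta P (x t)).
Proof.
  apply (bnd_ext (fun t => sum1 (nn P) (fun i => weight P i * sI (x t) i))).
  { intros; rewrite (Theta_weighted P); auto. }
  apply (bnd_sum1 (nn P) (fun i t => weight P i * sI (x t) i)). intros k Hk.
  apply (bnd_mult (fun _ => weight P k) (fun t => sI (x t) k)); [apply bnd_const| apply bnd_I; auto].
Qed.

Lemma bnd_dS k : (1 <= k <= nn P)%nat -> bnd (fun t => sS (rhs P (x t)) k).
Proof. intros Hk. pose proof (bnd_S k Hk). pose proof (bnd_V k Hk). pose proof bnd_Theta. unfold rhs; simpl. bnd_tac. Qed.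

Lemma bnd_dV k : (1 <= k <= nn P)%nat -> bnd (fun t => sV (rhs P (x t)) k).
Proof. intros Hk. pose proof (bnd_S k Hk). pose proof (bnd_V k Hk). pose proof bnd_Theta. unfold rhs; simpl. bnd_tac. Qed.

Lemma bnd_dI k : (1 <= k <= nn P)%nat -> bnd (fun t => sI (rhs P (x t)) k).
Proof.
  intros Hk. pose proof (bnd_S k Hk). pose proof (bnd_V k Hk). pose proof (bnd_I k Hk). pose proof bnd_Theta.
  unfold rhs; simpl. bnd_tac.
Qed.

Lemma lyap_deriv_le_dissipation_k k t : (1 <= k <= nn P)%nat -> 0 < t ->
  lyap_deriv P E (x t) <= - (weight P k * dissipation_k P E k (x t)).
Proof.
  intros Hk Ht. assert (Hp := SVI_pos_t t ltac:(lra)).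
  eapply Rle_trans; [apply (lyap_deriv_le P G E HE (x t) Hp)|].
  apply Ropp_le_contravar, (sum1_term_le (nn P) (fun k => weight P k * dissipation_k P E k (x t))); auto.
  intros j Hj. apply Rmult_le_pos; [left; apply (weight_pos P G); auto| apply (dissipation_k_nonneg P G E HE); auto].
Qed.

Lemma cv_of_dissipation_k k f Df fs c0 : (1 <= k <= nn P)%nat -> 0 < c0 ->
  (forall t, 0 < t -> derivable_pt_lim f t (Df t)) -> bnd Df ->
  (forall t, 0 < t -> c0 * (f t - fs)^2 <= weight P k * dissipation_k P E k (x t)) ->
  cvinf f fs.
Proof.
  intros Hk Hc Hd HDf Hdis. destruct (lipschitz_of_bnd_deriv f Df Hd HDf) as [B HB].
  apply (cv_of_dissipation (fun u => lyap P E (x u)) (fun u => lyap_deriv P E (x u)) f fs c0 B); auto.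
  - intros t Ht. apply (derivable_lyap P G E HE x Hx); auto. apply SVI_pos_t; lra.
  - intros t Ht. apply (lyap_nonneg P G E HE). apply SVI_pos_t; lra.
  - intros t Ht. pose proof (lyap_deriv_le_dissipation_k k t Hk Ht). specialize (Hdis t Ht). lra.
Qed.

Lemma cv_S k : (1 <= k <= nn P)%nat -> cvinf (fun t => sS (x t) k) (sS E k).
Proof.
  intros Hk. destruct (endemic_facts_of P G E HE k Hk) as [eS _ _ _ _ _ _ _ _ _ _].
  pose proof (weight_pos P G k Hk). pose proof (adm_d P G).
  assert (Hsup : 0 < S_sup k) by (destruct (SVI_pos_t 1 ltac:(lra) k Hk) as [a _];
    pose proof (SVI_le_sup k 1 Hk ltac:(lra)); lra).
  apply (cv_of_dissipation_k k _ (fun t => sS (rhs P (x t)) k) _ (weight P k * dd P / S_sup k) Hk);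
    [apply Rdiv_lt_0_compat; nra| intros; apply (dS P x Hx); auto| apply bnd_dS; auto|].
  intros t Ht. destruct (SVI_pos_t t ltac:(lra) k Hk) as [a _]. destruct (SVI_le_sup k t Hk ltac:(lra)) as [s1 _].
  destruct (dissipation_k_ge P G E HE (x t) k Hk (SVI_pos_t t ltac:(lra))) as [D1 _].
  assert ((sS (x t) k - sS E k)^2 / S_sup k <= (sS (x t) k - sS E k)^2 / sS (x t) k).
  { unfold Rdiv. apply Rmult_le_compat_l; [apply pow2_ge_0| apply Rinv_le_contravar; lra]. }
  replace (weight P k * dd P / S_sup k * (sS (x t) k - sS E k)^2)
    with (weight P k * (dd P * ((sS (x t) k - sS E k)^2 / S_sup k))) by (field; lra).
  apply Rmult_le_compat_l; [lra|]. eapply Rle_trans; [|exact D1].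
  unfold Rdiv. rewrite Rmult_assoc. apply Rmult_le_compat_l; lra.
Qed.

Lemma cv_S_V_ratio k : (1 <= k <= nn P)%nat ->
  cvinf (fun t => sS (x t) k / sS E k - sV (x t) k / sV E k) 0.
Proof.
  intros Hk. destruct (endemic_facts_of P G E HE k Hk) as [eS eV _ _ _ _ _ _ _ _ _].
  pose proof (weight_pos P G k Hk). pose proof (adm_omega P G).
  destruct (SVI_pos_t 1 ltac:(lra) k Hk) as [a1 [b1 _]]. destruct (SVI_le_sup k 1 Hk ltac:(lra)) as [s1 [v1 _]].
  set (xm := S_sup k / sS E k). set (ym := V_sup k / sV E k).
  assert (xmp : 0 < xm) by (apply Rdiv_lt_0_compat; lra). assert (ymp : 0 < ym) by (apply Rdiv_lt_0_compat; lra).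
  apply (cv_of_dissipation_k k _ (fun t => sS (rhs P (x t)) k / sS E k - sV (rhs P (x t)) k / sV E k) _
    (weight P k * pomega P * sV E k / (xm * ym)) Hk).
  - apply Rdiv_lt_0_compat; [apply Rmult_lt_0_compat; [nra| auto]| nra].
  - intros t Ht. apply (derivable_pt_lim_minus (fun t => sS (x t) k / sS E k) (fun t => sV (x t) k / sV E k));
      apply derivable_pt_lim_divc; try lra; [apply (dS P x Hx)| apply (dV P x Hx)]; auto.
  - pose proof (bnd_dS k Hk). pose proof (bnd_dV k Hk). bnd_tac.
  - intros t Ht. destruct (SVI_pos_t t ltac:(lra) k Hk) as [a [b _]].
    destruct (SVI_le_sup k t Hk ltac:(lra)) as [s2 [v2 _]].
    destruct (dissipation_k_ge P G E HE (x t) k Hk (SVI_pos_t t ltac:(lra))) as [_ D2].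
    set (X := sS (x t) k / sS E k) in *. set (Y := sV (x t) k / sV E k) in *.
    assert (Xp : 0 < X) by (apply Rdiv_lt_0_compat; lra). assert (Yp : 0 < Y) by (apply Rdiv_lt_0_compat; lra).
    assert (X <= xm) by (unfold X, xm, Rdiv; apply Rmult_le_compat_r; [left; apply Rinv_0_lt_compat|]; lra).
    assert (Y <= ym) by (unfold Y, ym, Rdiv; apply Rmult_le_compat_r; [left; apply Rinv_0_lt_compat|]; lra).
    assert ((X - Y)^2 / (xm * ym) <= (X - Y)^2 / (X * Y)).
    { unfold Rdiv. apply Rmult_le_compat_l; [apply pow2_ge_0| apply Rinv_le_contravar; [nra| apply Rmult_le_compat; lra]]. }
    replace (weight P k * pomega P * sV E k / (xm * ym) * (X - Y - 0)^2)
      with (weight P k * (pomega P * sV E k * ((X - Y)^2 / (xm * ym)))) by (field; lra).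
    replace (pomega P * sV E k * (X - Y)^2 / (X * Y)) with (pomega P * sV E k * ((X - Y)^2 / (X * Y)))
      in D2 by (field; lra).
    apply Rmult_le_compat_l; [lra|]. eapply Rle_trans; [|exact D2].
    apply Rmult_le_compat_l; [nra| exact H3].
Qed.

Lemma cv_V k : (1 <= k <= nn P)%nat -> cvinf (fun t => sV (x t) k) (sV E k).
Proof.
  intros Hk. destruct (endemic_facts_of P G E HE k Hk) as [eS eV _ _ _ _ _ _ _ _ _].
  assert (K : cvinf (fun t => sV E k * (sS (x t) k * / sS E k - (sS (x t) k / sS E k - sV (x t) k / sV E k)))
    (sV E k * (sS E k * / sS E k - 0))).
  { apply cv_scal, cv_minus; [apply (cv_mult (fun t => sS (x t) k) (fun _ => / sS E k))|].
    apply cv_S; auto. apply cv_const. apply cv_S_V_ratio; auto. }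
  replace (sV E k * (sS E k * / sS E k - 0)) with (sV E k) in K by (field; lra).
  eapply cv_ext; [|exact K]. intros t Ht. simpl. field. lra.
Qed.

Lemma derivable_Theta t : 0 < t ->
  derivable_pt_lim (fun u => Theta P (x u)) t (sum1 (nn P) (fun i => weight P i * sI (rhs P (x t)) i)).
Proof.
  intros Ht.
  assert (K : derivable_pt_lim (fun u => sum1 (nn P) (fun i => weight P i * sI (x u) i)) t
                (sum1 (nn P) (fun i => weight P i * sI (rhs P (x t)) i))).
  { apply (derivable_pt_lim_sum1 (nn P) (fun i u => weight P i * sI (x u) i)). intros i Hi.
    apply (derivable_pt_lim_scal (fun u => sI (x u) i)). apply (dI P x Hx); auto. }
  intros eps He. destruct (K eps He) as [del Hdel]. exists del. intros h Hh Hh2.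
  rewrite !(Theta_weighted P). apply Hdel; auto.
Qed.

Lemma derivable_dS k t : (1 <= k <= nn P)%nat -> 0 < t ->
  derivable_pt_lim (fun u => sS (rhs P (x u)) k) t
   (- (lam P k * (sS (rhs P (x t)) k * Theta P (x t)
        + sS (x t) k * sum1 (nn P) (fun i => weight P i * sI (rhs P (x t)) i)))
    + pomega P * sV (rhs P (x t)) k - (mu P k + dd P) * sS (rhs P (x t)) k).
Proof.
  intros Hk Ht.
  assert (H := derivable_pt_lim_minus _ _ t _ _ (derivable_pt_lim_plus _ _ t _ _
     (derivable_pt_lim_minus _ _ t _ _ (derivable_pt_lim_const (Lam P k) t)
        (derivable_pt_lim_mult _ _ t _ _ (derivable_pt_lim_scal _ (lam P k) t _ (dS P x Hx k t Hk Ht))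
          (derivable_Theta t Ht)))
     (derivable_pt_lim_scal _ (pomega P) t _ (dV P x Hx k t Hk Ht)))
     (derivable_pt_lim_scal _ (mu P k + dd P) t _ (dS P x Hx k t Hk Ht))).
  unfold rhs at 1; simpl. eapply derivable_pt_lim_eq; [|exact H].
  unfold mult_real_fct, mult_fct, minus_fct, plus_fct, fct_cte, rhs; simpl. ring.
Qed.

Lemma cv_dS k : (1 <= k <= nn P)%nat -> cvinf (fun t => sS (rhs P (x t)) k) 0.
Proof.
  intros Hk. destruct (lipschitz_of_bnd_deriv _ _ (fun t => derivable_dS k t Hk)) as [B HB].
  - pose proof (bnd_dS k Hk). pose proof (bnd_dV k Hk). pose proof (bnd_S k Hk). pose proof bnd_Theta.
    assert (bnd (fun t => sum1 (nn P) (fun i => weight P i * sI (rhs P (x t)) i))).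
    { apply (bnd_sum1 (nn P) (fun i t => weight P i * sI (rhs P (x t)) i)). intros i Hi.
      apply (bnd_mult (fun _ => weight P i) (fun t => sI (rhs P (x t)) i)); [apply bnd_const| apply bnd_dI; auto]. }
    bnd_tac.
  - apply (barbalat (fun t => sS (x t) k) _ (sS E k) B); auto. intros; apply (dS P x Hx); auto. apply cv_S; auto.
Qed.

(* [Theta] is read off the [S]-equation of class [1], whose left-hand side tends to [0]. *)
Lemma cv_Theta : cvinf (fun t => Theta P (x t)) (Theta P E).
Proof.
  assert (Hk : (1 <= 1 <= nn P)%nat) by (pose proof (adm_n P G); lia).
  destruct (endemic_facts_of P G E HE 1 Hk) as [eS _ _ _ _ e1 _ _ _ _ _]. pose proof (adm_lam P G 1 Hk).
  apply (cv_ext (fun t => (Lam P 1 + pomega P * sV (x t) 1 - (mu P 1 + dd P) * sS (x t) 1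
                            - sS (rhs P (x t)) 1) * / (lam P 1 * sS (x t) 1))).
  { intros t Ht. destruct (SVI_pos_t t ltac:(lra) 1%nat Hk) as [a _]. unfold rhs; simpl. field. split; lra. }
  replace (Theta P E) with ((Lam P 1 + pomega P * sV E 1 - (mu P 1 + dd P) * sS E 1 - 0) * / (lam P 1 * sS E 1))
    by (rewrite e1; field; split; lra).
  apply cv_mult.
  - apply cv_minus; [|apply cv_dS; auto].
    apply cv_minus; [apply cv_plus; [apply cv_const| apply cv_scal, cv_V; auto]| apply cv_scal, cv_S; auto].
  - apply (cv_inv (fun t => lam P 1 * sS (x t) 1)); [apply cv_scal, cv_S; auto| nra].
Qed.

Lemma cv_I k : (1 <= k <= nn P)%nat -> cvinf (fun t => sI (x t) k) (sI E k).
Proof.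
  intros Hk. destruct (endemic_facts_of P G E HE k Hk) as [_ _ _ _ _ _ _ e3 _ _ _].
  assert (0 < outflow_I P) by (unfold outflow_I; pose proof (adm_d P G); pose proof (adm_beta P G); pose proof (adm_gamma P G); lra).
  replace (sI E k) with (lam P k * (sS E k + pdelta P * sV E k) * Theta P E / outflow_I P) by (rewrite <- e3; field; lra).
  apply (linear_ode_cv _ (fun t => lam P k * (sS (x t) k + pdelta P * sV (x t) k) * Theta P (x t))); auto.
  - intros u Hu. eapply derivable_pt_lim_eq; [|apply (dI P x Hx); auto]. unfold rhs, outflow_I; simpl. ring.
  - apply (cv_mult (fun t => lam P k * (sS (x t) k + pdelta P * sV (x t) k))); [|apply cv_Theta].
    apply cv_scal, cv_plus; [apply cv_S; auto| apply cv_scal, cv_V; auto].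
Qed.

Lemma cv_Q k : (1 <= k <= nn P)%nat -> cvinf (fun t => sQ (x t) k) (sQ E k).
Proof.
  intros Hk. destruct (endemic_facts_of P G E HE k Hk) as [_ _ _ _ _ _ _ _ e4 _ _].
  assert (0 < peta P + dd P) by (pose proof (adm_d P G); pose proof (adm_eta P G); lra).
  replace (sQ E k) with (pbeta P * sI E k / (peta P + dd P)) by (rewrite <- e4; field; lra).
  apply (linear_ode_cv _ (fun t => pbeta P * sI (x t) k)); auto.
  - intros u Hu. eapply derivable_pt_lim_eq; [|apply (dQ P x Hx); auto]. unfold rhs; simpl. ring.
  - apply cv_scal, cv_I; auto.
Qed.

Lemma cv_R k : (1 <= k <= nn P)%nat -> cvinf (fun t => sR (x t) k) (sR E k).
Proof.
  intros Hk. destruct (endemic_facts_of P G E HE k Hk) as [_ _ _ _ _ _ _ _ _ _ etot].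
  assert (Tot : forall t, 0 <= t -> total (x t) k = Nstar P k)
    by (intros; apply (total_invariant P G x Hx); auto; intros j Hj; apply (Hpd j Hj)).
  apply (cv_ext (fun t => Nstar P k - sS (x t) k - sV (x t) k - sI (x t) k - sQ (x t) k)).
  { intros t Ht. specialize (Tot t ltac:(lra)). unfold total in Tot. lra. }
  replace (sR E k) with (Nstar P k - sS E k - sV E k - sI E k - sQ E k) by (unfold total in etot; lra).
  repeat apply cv_minus; [apply cv_const| apply cv_S| apply cv_V| apply cv_I| apply cv_Q]; auto.
Qed.

Lemma attractive : forall eps, 0 < eps -> exists T, forall t, T <= t -> sdist P (x t) E < eps.
Proof.
  assert (C : cvinf (fun t => sdist P (x t) E) (sum1 (nn P) (fun _ => 0))).
  { unfold sdist. apply (cv_sum1 (nn P) (fun k t => Rabs (sS (x t) k - sS E k) + Rabs (sV (x t) k - sV E k)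
      + Rabs (sI (x t) k - sI E k) + Rabs (sQ (x t) k - sQ E k) + Rabs (sR (x t) k - sR E k)) (fun _ => 0)).
    intros k Hk. replace 0 with (0 + 0 + 0 + 0 + 0) by ring.
    repeat apply cv_plus; apply cv_dist; [apply cv_S|apply cv_V|apply cv_I|apply cv_Q|apply cv_R]; auto. }
  rewrite sum1_const, Rmult_0_r in C.
  intros eps He. destruct (C eps He) as [T HT]. exists T. intros t Ht. specialize (HT t Ht).
  rewrite Rminus_0_r in HT. eapply Rle_lt_trans; [apply Rle_abs| exact HT].
Qed.

End Attractivity.

Lemma sdist_term P s e k : (1 <= k <= nn P)%nat ->
  Rabs (sS s k - sS e k) + Rabs (sV s k - sV e k) + Rabs (sI s k - sI e k) + Rabs (sQ s k - sQ e k)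
  + Rabs (sR s k - sR e k) <= sdist P s e.
Proof.
  intros Hk. apply (sum1_term_le (nn P) (fun k => Rabs (sS s k - sS e k) + Rabs (sV s k - sV e k)
    + Rabs (sI s k - sI e k) + Rabs (sQ s k - sQ e k) + Rabs (sR s k - sR e k))); auto.
  intros j Hj. pose proof (Rabs_pos (sS s j - sS e j)). pose proof (Rabs_pos (sV s j - sV e j)).
  pose proof (Rabs_pos (sI s j - sI e j)). pose proof (Rabs_pos (sQ s j - sQ e j)).
  pose proof (Rabs_pos (sR s j - sR e j)). lra.
Qed.

Section Stability.
Variable P : Params.
Hypothesis G : admissible P.
Variable E : state.
Hypothesis HE : endemic_equilibrium P E.

Definition min_E := min1 (nn P) (fun k =>
  Rmin (sS E k) (Rmin (sV E k) (Rmin (sI E k) (Rmin (sQ E k) (sR E k))))).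

Lemma min_E_pos : 0 < min_E.
Proof.
  apply min1_pos. intros k Hk. destruct (endemic_facts_of P G E HE k Hk) as [eS eV eI eQ eR _ _ _ _ _ _].
  repeat apply Rmin_glb_lt; auto.
Qed.

Lemma min_E_le k : (1 <= k <= nn P)%nat ->
  min_E <= sS E k /\ min_E <= sV E k /\ min_E <= sI E k /\ min_E <= sQ E k /\ min_E <= sR E k.
Proof.
  intros Hk. assert (K := min1_le (nn P) (fun k =>
    Rmin (sS E k) (Rmin (sV E k) (Rmin (sI E k) (Rmin (sQ E k) (sR E k))))) k Hk).
  fold min_E in K. cbv beta in K. set (Q := sQ E k) in *. set (R := sR E k) in *. set (I := sI E k) in *.
  pose proof (Rmin_l (sS E k) (Rmin (sV E k) (Rmin I (Rmin Q R)))).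
  pose proof (Rmin_r (sS E k) (Rmin (sV E k) (Rmin I (Rmin Q R)))).
  pose proof (Rmin_l (sV E k) (Rmin I (Rmin Q R))). pose proof (Rmin_r (sV E k) (Rmin I (Rmin Q R))).
  pose proof (Rmin_l I (Rmin Q R)). pose proof (Rmin_r I (Rmin Q R)).
  pose proof (Rmin_l Q R). pose proof (Rmin_r Q R). lra.
Qed.

(* The Lyapunov function is [O(del^2)] on data [del]-close to [E]; conversely each
   component of a state with Lyapunov function [O(del^2)] is [O(del)]-close to [E]. *)
Definition lyap_init_const := sum1 (nn P) (fun k => weight P k * (2 / sS E k + 2 / sV E k + 2 / sI E k)).
Definition close_const w s :=
  s * (1 + 2 * (2 * (lyap_init_const / (w * s)) + 3) * (lyap_init_const / (w * s))).
Definition SVI_const k := close_const (weight P k) (sS E k) + close_const (weight P k) (sV E k)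
  + close_const (weight P k) (sI E k).
Definition outflow_Q := peta P + dd P.
Definition dist_const_k k := 2 * SVI_const k + 2 + 2 * pbeta P * SVI_const k / outflow_Q.
Definition dist_const := sum1 (nn P) dist_const_k.

Lemma lyap_init_const_nonneg : 0 <= lyap_init_const.
Proof.
  apply sum1_nonneg. intros k Hk. destruct (endemic_facts_of P G E HE k Hk) as [eS eV eI _ _ _ _ _ _ _ _].
  apply Rmult_le_pos; [left; apply (weight_pos P G); auto|].
  assert (0 < 2 / sS E k) by (apply Rdiv_lt_0_compat; lra).
  assert (0 < 2 / sV E k) by (apply Rdiv_lt_0_compat; lra).
  assert (0 < 2 / sI E k) by (apply Rdiv_lt_0_compat; lra). lra.
Qed.

Lemma close_const_nonneg w s : 0 < w -> 0 < s -> 0 <= close_const w s.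
Proof.
  intros Hw Hs. pose proof lyap_init_const_nonneg. unfold close_const.
  assert (0 <= lyap_init_const / (w * s)) by (apply Rmult_le_pos; [lra| left; apply Rinv_0_lt_compat; nra]).
  apply Rmult_le_pos; nra.
Qed.

Lemma SVI_const_nonneg k : (1 <= k <= nn P)%nat -> 0 <= SVI_const k.
Proof.
  intros Hk. destruct (endemic_facts_of P G E HE k Hk) as [eS eV eI _ _ _ _ _ _ _ _].
  pose proof (weight_pos P G k Hk). unfold SVI_const.
  pose proof (close_const_nonneg _ _ H eS). pose proof (close_const_nonneg _ _ H eV).
  pose proof (close_const_nonneg _ _ H eI). lra.
Qed.

Lemma outflow_Q_pos : 0 < outflow_Q.
Proof. unfold outflow_Q. pose proof (adm_eta P G). pose proof (adm_d P G). lra. Qed.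

Lemma dist_const_nonneg : 0 <= dist_const.
Proof.
  apply sum1_nonneg. intros k Hk. unfold dist_const_k.
  pose proof (SVI_const_nonneg k Hk). pose proof outflow_Q_pos. pose proof (adm_beta P G).
  assert (0 <= 2 * pbeta P * SVI_const k / outflow_Q) by (apply Rmult_le_pos; [nra| left; apply Rinv_0_lt_compat; lra]).
  lra.
Qed.

Section Near.
Variable x : R -> state.
Hypothesis Hx : is_solution P x.
Hypothesis Hf : feasible P (x 0).
Variable del : R.
Hypothesis Hdel : 0 < del <= Rmin (min_E / 2) 1.
Hypothesis Hd0 : sdist P (x 0) E < del.

Lemma init_close k : (1 <= k <= nn P)%nat ->
  Rabs (sS (x 0) k - sS E k) < del /\ Rabs (sV (x 0) k - sV E k) < del /\ Rabs (sI (x 0) k - sI E k) < del /\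
  Rabs (sQ (x 0) k - sQ E k) < del /\ Rabs (sR (x 0) k - sR E k) < del.
Proof.
  intros Hk. pose proof (sdist_term P (x 0) E k Hk).
  pose proof (Rabs_pos (sS (x 0) k - sS E k)). pose proof (Rabs_pos (sV (x 0) k - sV E k)).
  pose proof (Rabs_pos (sI (x 0) k - sI E k)). pose proof (Rabs_pos (sQ (x 0) k - sQ E k)).
  pose proof (Rabs_pos (sR (x 0) k - sR E k)). repeat split; lra.
Qed.

Lemma del_le : del <= min_E / 2 /\ del <= 1.
Proof. pose proof (Rmin_l (min_E / 2) 1). pose proof (Rmin_r (min_E / 2) 1). lra. Qed.

Lemma positive_data_init : positive_data P (x 0).
Proof.
  intros k Hk. split; [|apply (Hf k Hk)]. intros j Hj. pose proof del_le.
  destruct (init_close k Hk) as [i1 [i2 [i3 [i4 i5]]]]. destruct (min_E_le k Hk) as [m1 [m2 [m3 [m4 m5]]]].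
  apply Rabs_def2 in i1, i2, i3, i4, i5.
  destruct j as [|[|[|[|[|j]]]]]; simpl; try lra; lia.
Qed.

Lemma lyap_init_le : lyap P E (x 0) <= lyap_init_const * del^2.
Proof.
  unfold lyap, lyap_init_const. rewrite Rmult_comm, <- sum1_scal. apply sum1_le. intros k Hk.
  destruct (endemic_facts_of P G E HE k Hk) as [eS eV eI _ _ _ _ _ _ _ _]. pose proof (weight_pos P G k Hk).
  destruct (init_close k Hk) as [i1 [i2 [i3 _]]]. destruct (min_E_le k Hk) as [m1 [m2 [m3 _]]].
  pose proof del_le. unfold lyap_k.
  assert (A1 := volterra_term_le_of_close (sS (x 0) k) (sS E k) del eS i1 ltac:(lra)).
  assert (A2 := volterra_term_le_of_close (sV (x 0) k) (sV E k) del eV i2 ltac:(lra)).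
  assert (A3 := volterra_term_le_of_close (sI (x 0) k) (sI E k) del eI i3 ltac:(lra)).
  replace (del ^ 2 * (weight P k * (2 / sS E k + 2 / sV E k + 2 / sI E k))) with
    (weight P k * (2 / sS E k * del^2 + 2 / sV E k * del^2 + 2 / sI E k * del^2)) by ring.
  apply Rmult_le_compat_l; lra.
Qed.

Lemma SVI_close k t : (1 <= k <= nn P)%nat -> 0 <= t ->
  Rabs (sS (x t) k - sS E k) + Rabs (sV (x t) k - sV E k) + Rabs (sI (x t) k - sI E k) <= SVI_const k * del.
Proof.
  intros Hk Ht.
  destruct (SVI_pos_lyap_le P G E HE x Hx (SVI_pos_init P x positive_data_init) t Ht) as [Hp HL].
  destruct (endemic_facts_of P G E HE k Hk) as [eS eV eI _ _ _ _ _ _ _ _]. pose proof (weight_pos P G k Hk).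
  destruct (Hp k Hk) as [a [b c]]. pose proof lyap_init_const_nonneg. pose proof lyap_init_le. pose proof del_le.
  destruct (lyap_terms_le P G E HE k (x t) Hk Hp) as [p1 [p2 p3]].
  pose proof (volterra_term_close (weight P k) (sS E k) (sS (x t) k) lyap_init_const del H eS a H0 ltac:(lra) ltac:(lra)).
  pose proof (volterra_term_close (weight P k) (sV E k) (sV (x t) k) lyap_init_const del H eV b H0 ltac:(lra) ltac:(lra)).
  pose proof (volterra_term_close (weight P k) (sI E k) (sI (x t) k) lyap_init_const del H eI c H0 ltac:(lra) ltac:(lra)).
  unfold SVI_const, close_const. lra.
Qed.

Lemma Q_close k t : (1 <= k <= nn P)%nat -> 0 <= t ->
  Rabs (sQ (x t) k - sQ E k) <= del + pbeta P * SVI_const k / outflow_Q * del.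
Proof.
  intros Hk Ht. destruct (endemic_facts_of P G E HE k Hk) as [_ _ _ _ _ _ _ _ e4 _ _].
  pose proof outflow_Q_pos. pose proof (adm_beta P G). pose proof (SVI_const_nonneg k Hk).
  assert (Qs : sQ E k = pbeta P * sI E k / outflow_Q) by (unfold outflow_Q in *; rewrite <- e4; field; lra).
  assert (B : Rabs (sQ (x t) k - sQ E k) <= Rabs (sQ (x 0) k - sQ E k) * exp (- (outflow_Q * (t - 0)))
              + pbeta P * (SVI_const k * del) / outflow_Q).
  { rewrite Qs. apply (linear_ode_estimate (fun u => sQ (x u) k) (fun u => pbeta P * sI (x u) k));
      auto; [lra| | | | ].
    - apply Rmult_le_pos; nra.
    - intros u Hu. eapply derivable_pt_lim_eq; [|apply (dQ P x Hx); auto]. unfold rhs, outflow_Q; simpl. ring.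
    - unfold right_cont. apply (lQ P x Hx); auto; lra.
    - intros u Hu. replace (pbeta P * sI (x u) k - pbeta P * sI E k) with (pbeta P * (sI (x u) k - sI E k)) by ring.
      rewrite Rabs_mult, Rabs_pos_eq by lra. apply Rmult_le_compat_l; [lra|].
      pose proof (SVI_close k u Hk ltac:(lra)).
      pose proof (Rabs_pos (sS (x u) k - sS E k)). pose proof (Rabs_pos (sV (x u) k - sV E k)). lra. }
  assert (exp (- (outflow_Q * (t - 0))) <= 1).
  { rewrite <- exp_0. destruct (Req_dec t 0) as [->|]; [right; f_equal; ring|].
    left; apply exp_increasing. assert (0 < t) by lra. nra. }
  destruct (init_close k Hk) as [_ [_ [_ [i4 _]]]].
  pose proof (exp_pos (- (outflow_Q * (t - 0)))). pose proof (Rabs_pos (sQ (x 0) k - sQ E k)).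
  replace (pbeta P * SVI_const k / outflow_Q * del) with (pbeta P * (SVI_const k * del) / outflow_Q) by (field; lra).
  nra.
Qed.

Lemma R_close k t : (1 <= k <= nn P)%nat -> 0 <= t ->
  Rabs (sR (x t) k - sR E k) <= Rabs (sS (x t) k - sS E k) + Rabs (sV (x t) k - sV E k)
    + Rabs (sI (x t) k - sI E k) + Rabs (sQ (x t) k - sQ E k).
Proof.
  intros Hk Ht. destruct (endemic_facts_of P G E HE k Hk) as [_ _ _ _ _ _ _ _ _ _ etot].
  assert (Tt : total (x t) k = Nstar P k) by (apply (total_invariant P G x Hx); auto; intros j Hj; apply (Hf j Hj)).
  unfold total in Tt, etot.
  replace (sR (x t) k - sR E k) with (- ((sS (x t) k - sS E k) + (sV (x t) k - sV E k)
    + (sI (x t) k - sI E k) + (sQ (x t) k - sQ E k))) by lra.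
  rewrite Rabs_Ropp. eapply Rle_trans; [apply Rabs_triang|]. apply Rplus_le_compat_r.
  eapply Rle_trans; [apply Rabs_triang|]. apply Rplus_le_compat_r.
  eapply Rle_trans; [apply Rabs_triang|]. lra.
Qed.

Lemma sdist_le t : 0 <= t -> sdist P (x t) E <= dist_const * del.
Proof.
  intros Ht. unfold sdist, dist_const. rewrite Rmult_comm, <- sum1_scal. apply sum1_le. intros k Hk.
  pose proof (SVI_close k t Hk Ht). pose proof (Q_close k t Hk Ht). pose proof (R_close k t Hk Ht).
  unfold dist_const_k. lra.
Qed.

End Near.

Theorem stability : forall eps, 0 < eps -> exists del, 0 < del /\
  forall x, is_solution P x -> feasible P (x 0) -> sdist P (x 0) E < del ->
  forall t, 0 <= t -> sdist P (x t) E < eps.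
Proof.
  intros eps He. pose proof min_E_pos. pose proof dist_const_nonneg.
  set (del := Rmin (Rmin (min_E / 2) 1) (eps / (dist_const + 1))).
  assert (Hdel : 0 < del <= Rmin (min_E / 2) 1).
  { split; [repeat apply Rmin_glb_lt; try lra; apply Rdiv_lt_0_compat; lra| apply Rmin_l]. }
  exists del. split; [lra|]. intros x Hx Hf Hd t Ht.
  eapply Rle_lt_trans; [apply (sdist_le x Hx Hf del Hdel Hd t Ht)|].
  assert (del <= eps / (dist_const + 1)) by apply Rmin_r.
  apply Rle_lt_trans with (dist_const * (eps / (dist_const + 1))); [apply Rmult_le_compat_l; lra|].
  apply (Rmult_lt_reg_r (dist_const + 1)); [lra|].
  replace (dist_const * (eps / (dist_const + 1)) * (dist_const + 1)) with (dist_const * eps) by (field; lra).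
  nra.
Qed.

End Stability.

(* [state_of_theta th] solves the equilibrium equations with [Theta] replaced by the
   prescribed value [th]; it is an equilibrium iff [theta_map th = 1].  Since
   [theta_map 0 = R0 > 1] and [theta_map th = O(1/th)], a root exists. *)
Section Existence.
Variable P : Params.
Hypothesis G : admissible P.

Definition SV_denom th k :=
  (lam P k * th + mu P k + dd P) * (pdelta P * lam P k * th + outflow_V P) - pomega P * mu P k.
Definition S_of th k := Lam P k * (pdelta P * lam P k * th + outflow_V P) / SV_denom th k.
Definition V_of th k := Lam P k * mu P k / SV_denom th k.
Definition I_of th k := lam P k * th * (S_of th k + pdelta P * V_of th k) / outflow_I P.
Definition Q_of th k := pbeta P * I_of th k / (peta P + dd P).
Definition R_of th k := (pgamma P * I_of th k + peta P * Q_of th k + palpha P * V_of th k) / dd P.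
Definition theta_map_term th k :=
  phi P k * pk P k * lam P k * (S_of th k + pdelta P * V_of th k) / outflow_I P.
Definition theta_map th := / avgk P * sum1 (nn P) (theta_map_term th).
Definition state_of_theta th := mkState (S_of th) (V_of th) (I_of th) (Q_of th) (R_of th).

Lemma outflow_I_pos : 0 < outflow_I P.
Proof. unfold outflow_I. pose proof (adm_d P G); pose proof (adm_beta P G); pose proof (adm_gamma P G). lra. Qed.

Lemma SV_denom_pos th k : 0 <= th -> (1 <= k <= nn P)%nat -> 0 < SV_denom th k.
Proof.
  intros Hth Hk. unfold SV_denom, outflow_V. pose proof (adm_lam P G k Hk). pose proof (adm_mu P G k Hk).
  pose proof (adm_d P G). pose proof (adm_omega P G). pose proof (adm_alpha P G). pose proof (adm_delta P G).
  assert (0 <= lam P k * th) by nra. assert (0 <= pdelta P * lam P k * th) by (apply Rmult_le_pos; nra).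
  nra.
Qed.

Lemma S_of_V_of_pos th k : 0 <= th -> (1 <= k <= nn P)%nat -> 0 < S_of th k /\ 0 < V_of th k.
Proof.
  intros Hth Hk. pose proof (SV_denom_pos th k Hth Hk). pose proof (Lam_pos P G k Hk).
  pose proof (adm_mu P G k Hk). pose proof (adm_lam P G k Hk). pose proof (adm_delta P G).
  pose proof (adm_d P G). pose proof (adm_omega P G). pose proof (adm_alpha P G).
  assert (0 <= pdelta P * lam P k * th) by (apply Rmult_le_pos; nra).
  unfold S_of, V_of, outflow_V. split; apply Rdiv_lt_0_compat; auto; apply Rmult_lt_0_compat; auto; lra.
Qed.

Lemma Theta_state_of_theta th : Theta P (state_of_theta th) = th * theta_map th.
Proof.
  unfold Theta, theta_map. simpl.
  replace (th * (/ avgk P * sum1 (nn P) (theta_map_term th))) with (/ avgk P * (th * sum1 (nn P) (theta_map_term th))) by ring.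
  f_equal. rewrite <- sum1_scal. apply sum1_ext. intros k Hk. unfold I_of, theta_map_term. field. apply Rgt_not_eq, outflow_I_pos.
Qed.

Lemma theta_map_0 : theta_map 0 = R0num P.
Proof.
  unfold theta_map, R0num. f_equal. apply sum1_ext. intros k Hk. pose proof outflow_I_pos.
  pose proof (SV_denom_pos 0 k (Rle_refl 0) Hk).
  unfold theta_map_term, S_of, V_of. unfold SV_denom, outflow_V in *. unfold outflow_I in *.
  field. split; [|lra].
  replace ((dd P + palpha P + pomega P) * dd P + (dd P + palpha P) * mu P k) with
    ((lam P k * 0 + mu P k + dd P) * (pdelta P * lam P k * 0 + (dd P + pomega P + palpha P)) - pomega P * mu P k) by ring.
  lra.
Qed.

Lemma theta_map_term_le th k : 0 < th -> (1 <= k <= nn P)%nat -> theta_map_term th k <= phi P k * pk P k * Lam P k / outflow_I P / th.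
Proof.
  intros Hth Hk. pose proof (SV_denom_pos th k ltac:(lra) Hk) as HD. pose proof (Lam_pos P G k Hk). pose proof (adm_mu P G k Hk).
  pose proof (adm_lam P G k Hk) as Hl. pose proof (adm_delta P G). pose proof (adm_d P G). pose proof (adm_omega P G). pose proof (adm_alpha P G).
  pose proof outflow_I_pos. pose proof (adm_phi P G k Hk). pose proof (adm_p P G k Hk).
  assert (K : lam P k * th * (S_of th k + pdelta P * V_of th k) <= Lam P k).
  { unfold S_of, V_of. replace (lam P k * th * (Lam P k * (pdelta P * lam P k * th + outflow_V P) / SV_denom th k + pdelta P * (Lam P k * mu P k / SV_denom th k)))
      with (Lam P k * (lam P k * th * (pdelta P * lam P k * th + outflow_V P + pdelta P * mu P k)) / SV_denom th k) by (field; lra).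
    apply (Rmult_le_reg_r (SV_denom th k)); auto. unfold Rdiv. rewrite Rmult_assoc, Rinv_l, Rmult_1_r by lra.
    apply Rmult_le_compat_l; [lra|]. unfold SV_denom, outflow_V.
    assert (0 <= pdelta P * lam P k * th) by (apply Rmult_le_pos; nra).
    assert (pdelta P * mu P k * (lam P k * th) <= mu P k * (pdelta P * lam P k * th)) by nra.
    nra. }
  unfold theta_map_term. apply (Rmult_le_reg_r th); auto.
  replace (phi P k * pk P k * Lam P k / outflow_I P / th * th) with (phi P k * pk P k * Lam P k / outflow_I P) by (field; lra).
  replace (phi P k * pk P k * lam P k * (S_of th k + pdelta P * V_of th k) / outflow_I P * th) with
    (phi P k * pk P k * (lam P k * th * (S_of th k + pdelta P * V_of th k)) / outflow_I P) by (field; lra).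
  unfold Rdiv. apply Rmult_le_compat_r. left; apply Rinv_0_lt_compat; lra.
  apply Rmult_le_compat_l; auto. nra.
Qed.

Lemma theta_map_continuous th0 : 0 <= th0 -> continuity_pt theta_map th0.
Proof.
  intros Hth. unfold continuity_pt, continue_in, theta_map.
  apply (lim_mult (fun _ => / avgk P) (fun th => sum1 (nn P) (theta_map_term th))). apply lim_const.
  apply (lim_sum1 (nn P) (fun k th => theta_map_term th k)). intros k Hk.
  assert (continuity_pt (fun th => theta_map_term th k) th0).
  { unfold theta_map_term, S_of, V_of. pose proof (SV_denom_pos th0 k Hth Hk). pose proof outflow_I_pos. unfold SV_denom in *. reg; lra. }
  exact H.
Qed.

Lemma theta_map_fixed_point : 1 < R0num P -> exists th, 0 < th /\ theta_map th = 1.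
Proof.
  intros HR. set (C := / avgk P * sum1 (nn P) (fun k => phi P k * pk P k * Lam P k / outflow_I P)).
  pose proof (avgk_pos P G). pose proof outflow_I_pos.
  assert (C0 : 0 <= C).
  { apply Rmult_le_pos. left; apply Rinv_0_lt_compat; auto. apply sum1_nonneg. intros k Hk.
    pose proof (Lam_pos P G k Hk). pose proof (adm_phi P G k Hk). pose proof (adm_p P G k Hk).
    apply Rmult_le_pos; [|left; apply Rinv_0_lt_compat; auto]. apply Rmult_le_pos; [apply Rmult_le_pos|]; lra. }
  set (th1 := 2 * C + 1).
  assert (G1 : theta_map th1 < 1).
  { assert (theta_map th1 <= C / th1).
    { unfold theta_map, C. unfold Rdiv. rewrite Rmult_assoc. apply Rmult_le_compat_l. left; apply Rinv_0_lt_compat; auto.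
      rewrite Rmult_comm, <- sum1_scal. apply sum1_le. intros k Hk. rewrite Rmult_comm. fold (Rdiv (phi P k * pk P k * Lam P k / outflow_I P) th1).
      apply theta_map_term_le; auto. unfold th1; lra. }
    assert (C / th1 < 1) by (apply (Rmult_lt_reg_r th1); [unfold th1; lra|]; unfold th1; field_simplify; lra).
    lra. }
  destruct (IVT_interv (fun th => 1 - theta_map th) 0 th1) as [z [Hz1 Hz2]].
  - intros a Ha. apply continuity_pt_minus. apply continuity_pt_const. intros u v; auto. apply theta_map_continuous; lra.
  - unfold th1; lra.
  - rewrite theta_map_0. lra.
  - lra.
  - exists z. split; [|lra]. destruct Hz1 as [[Hz|Hz] _]; auto. subst z. rewrite theta_map_0 in Hz2. lra.
Qed.

Lemma state_of_theta_endemic th : 0 < th -> theta_map th = 1 -> endemic_equilibrium P (state_of_theta th).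
Proof.
  intros Hth HG.
  assert (HT : Theta P (state_of_theta th) = th) by (rewrite Theta_state_of_theta, HG; ring).
  split; [|lra].
  intros j k Hj Hk.
  destruct (S_of_V_of_pos th k ltac:(lra) Hk) as [HS HV]. pose proof (SV_denom_pos th k ltac:(lra) Hk) as HD.
  pose proof outflow_I_pos. pose proof (adm_lam P G k Hk). pose proof (adm_delta P G). pose proof (adm_d P G).
  pose proof (adm_beta P G). pose proof (adm_gamma P G). pose proof (adm_eta P G). pose proof (adm_alpha P G).
  assert (HI : 0 < I_of th k).
  { unfold I_of. apply Rdiv_lt_0_compat; auto. apply Rmult_lt_0_compat. nra.
    assert (0 <= pdelta P * V_of th k) by nra. lra. }
  assert (HQ : 0 < Q_of th k) by (unfold Q_of; apply Rdiv_lt_0_compat; nra).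
  assert (HR : 0 < R_of th k) by (unfold R_of; apply Rdiv_lt_0_compat; nra).
  destruct j as [|[|[|[|[|j]]]]]; try lia; cbv beta iota delta [compo];
    cbv beta iota zeta delta [rhs sS sV sI sQ sR]; rewrite ?HT; simpl; split; try lra.
  - unfold S_of, V_of. unfold SV_denom, outflow_V in *. field. lra.
  - unfold S_of, V_of. unfold SV_denom, outflow_V in *. field. lra.
  - unfold I_of, outflow_I in *. field. lra.
  - unfold Q_of. field. lra.
  - unfold R_of. field. lra.
Qed.

Lemma endemic_equilibrium_exists : 1 < R0num P -> exists E, endemic_equilibrium P E.
Proof.
  intros HR. destruct (theta_map_fixed_point HR) as [th [Hth Hfix]].
  exists (state_of_theta th). apply state_of_theta_endemic; auto.
Qed.

End Existence.

Lemma is_solution_const P E : endemic_equilibrium P E -> is_solution P (fun _ => E).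
Proof.
  intros [H _] j k Hj Hk. split.
  - intros t Ht. destruct (H j k Hj Hk) as [Z _]. rewrite Z. apply derivable_pt_lim_const.
  - apply lim_const.
Qed.

Lemma positive_data_of_endemic P (G : admissible P) E : endemic_equilibrium P E -> positive_data P E.
Proof.
  intros HE k Hk. destruct (endemic_facts_of P G E HE k Hk) as [eS eV eI eQ eR _ _ _ _ _ etot].
  split; auto. intros j Hj. destruct j as [|[|[|[|[|j]]]]]; simpl; auto; lia.
Qed.

(* The constant solution at [E'] is attracted to [E]. *)
Lemma endemic_equilibrium_unique P (G : admissible P) E E' :
  endemic_equilibrium P E -> endemic_equilibrium P E' ->
  forall j k, (j <= 4)%nat -> (1 <= k <= nn P)%nat -> compo j E' k = compo j E k.
Proof.
  intros HE HE' j k Hj Hk.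
  assert (A := attractive P G E HE (fun _ => E') (is_solution_const P E' HE') (positive_data_of_endemic P G E' HE')).
  assert (Z : Rabs (compo j E' k - compo j E k) <= sdist P E' E).
  { pose proof (sdist_term P E' E k Hk).
    pose proof (Rabs_pos (sS E' k - sS E k)). pose proof (Rabs_pos (sV E' k - sV E k)).
    pose proof (Rabs_pos (sI E' k - sI E k)). pose proof (Rabs_pos (sQ E' k - sQ E k)).
    pose proof (Rabs_pos (sR E' k - sR E k)).
    destruct j as [|[|[|[|[|j]]]]]; cbv beta iota delta [compo]; try lra; lia. }
  destruct (Req_dec (compo j E' k) (compo j E k)) as [|Hne]; auto.
  assert (P0 : 0 < Rabs (compo j E' k - compo j E k)) by (apply Rabs_pos_lt; lra).
  destruct (A _ P0) as [T HT]. specialize (HT T (Rle_refl _)). lra.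
Qed.

Theorem theorem4p5 (P : Params)
  (Hn : (1 <= nn P)%nat)
  (Hp : forall k, (1 <= k <= nn P)%nat -> 0 < pk P k)
  (Hpsum : sum1 (nn P) (pk P) = 1)
  (Hd : 0 < dd P) (Hbd : dd P < bb P)
  (HPhi : 0 < Phis P)
  (HPhieq : Phis P = / avgk P * sum1 (nn P) (fun i =>
               INR i * pk P i * bb P * Phis P / (dd P + bb P * INR i * Phis P)))
  (Hlam : forall k, (1 <= k <= nn P)%nat -> 0 < lam P k)
  (Hphi : forall k, (1 <= k <= nn P)%nat -> 0 < phi P k)
  (Hmu : forall k, (1 <= k <= nn P)%nat -> 0 < mu P k)
  (Halpha : 0 < palpha P) (Hbeta : 0 < pbeta P) (Hgamma : 0 < pgamma P)
  (Heta : 0 < peta P) (Homega : 0 < pomega P)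
  (Hdelta : 0 <= pdelta P <= 1)
  (HR0 : 1 < R0num P) :
  exists E : state,
    endemic_equilibrium P E /\
    (forall E', endemic_equilibrium P E' ->
       forall j k, (j <= 4)%nat -> (1 <= k <= nn P)%nat -> compo j E' k = compo j E k) /\
    (forall eps, 0 < eps -> exists del, 0 < del /\
       forall x, is_solution P x -> feasible P (x 0) -> sdist P (x 0) E < del ->
         forall t, 0 <= t -> sdist P (x t) E < eps) /\
    (forall x, is_solution P x -> positive_data P (x 0) ->
       forall eps, 0 < eps -> exists T, forall t, T <= t -> sdist P (x t) E < eps).
Proof.
  assert (G : admissible P) by (constructor; auto; lra).
  destruct (endemic_equilibrium_exists P G HR0) as [E HE].
  exists E. split; [exact HE|]. split; [|split].
  - intros E' HE'. apply (endemic_equilibrium_unique P G E E' HE HE').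
  - apply (stability P G E HE).
  - intros x Hx Hpd. apply (attractive P G E HE x Hx Hpd).
Qed.
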